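(* Let $A,B\in\mathbb{R}_+^{m\times n}$ be a WN-pair, and let $\mathcal{M}(B)$ be the set of all $K\subseteq[n]$ with $|K|=m$ such that $B[[m],K]$ is a monomial matrix. Then $$\rho(A,B)=\min\{\rho(B[[m],K]^{-1}A[[m],K]):K\in\mathcal{M}(B)\}.$$ For each $K\in\mathcal{M}(B)$ attaining this minimum there exists an optimal $\mathbf{y}\in\Pi_n$ with $\operatorname{supp}\mathbf{y}\subseteq K$ that is a GPF-eigenvector, i.e. $A\mathbf{y}=\rho(A,B)B\mathbf{y}$. If moreover the WN-pair is $S$-irreducible, then each such $\mathbf{y}$ is minimal optimal.
   Context: $[m]=\{1,\dots,m\}$; $\Pi_n$ is the set of probability vectors in $\mathbb{R}^n$; $\rho(C)$ is the spectral radius of a square matrix $C$. For $F\in\mathbb{R}^{m\times n}$ and $K\subseteq[n]$, $F[[m],K]$ is the submatrix formed by the columns in $K$. For $A,B\in\mathbb{R}_+^{m\times n}$ and $\mathbf{x}\in\mathbb{R}^n_+\setminus\{\mathbf{0}\}$, $r(A,B,\mathbf{x})=\max_{i\in[m]}\frac{(A\mathbf{x})_i}{(B\mathbf{x})_i}\in[0,\infty]$ (conventions $\frac00=0$, $\frac c0=\infty$ for $c>0$), and $\rho(A,B)=\inf\{r(A,B,\mathbf{x}):\mathbf{x}>\mathbf{0}\}$. A vector $\mathbf{y}\in\mathbb{R}^n_+\setminus\{\mathbf{0}\}$ is optimal if $r(A,B,\mathbf{y})=\rho(A,B)$ and there is a sequence $\mathbf{y}_k>\mathbf{0}$ with $\mathbf{y}_k\to\mathbf{y}$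 and $r(A,B,\mathbf{y}_k)\to\rho(A,B)$; minimal optimal if moreover no optimal vector has support strictly contained in $\operatorname{supp}\mathbf{y}$; a GPF-eigenvector if $A\mathbf{y}=\rho(A,B)B\mathbf{y}$. A pair $A,B\in\mathbb{R}_+^{m\times n}$ is a WN-pair if $n\ge m$, $B$ has no zero row, and each column of $B$ has exactly one positive entry. A square nonnegative matrix is monomial if each row and each column has exactly one positive entry; it is irreducible if the digraph with an edge $i\to j$ iff the $(i,j)$ entry is positive is strongly connected. A WN-pair is $S$-irreducible if for every $K\in\mathcal M(B)$ the matrix $B[[m],K]^{-1}A[[m],K]$ is irreducible. *)

(* classical reals.  Vectors are functions nat -> R (only the
   indices < n matter), matrices are functions nat -> nat -> R (only indices
   i < m, j < n matter). *)
From Stdlib Require Import Reals Lra Lia List Relations Sorted ClassicalEpsilon.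
Open Scope R_scope.

Fixpoint rsum (k : nat) (f : nat -> R) : R :=
  match k with O => 0 | S k' => rsum k' f + f k' end.

Definition vec := nat -> R.
Definition mat := nat -> nat -> R.

Definition mulv (n : nat) (F : mat) (x : vec) : vec :=
  fun i => rsum n (fun j => F i j * x j).

Definition mulm (k : nat) (M N : mat) : mat :=
  fun i j => rsum k (fun l => M i l * N l j).

Definition idm : mat := fun i j => if Nat.eqb i j then 1 else 0.

Definition is_inverse (k : nat) (M N : mat) : Prop :=
  forall i j, (i < k)%nat -> (j < k)%nat ->
    mulm k M N i j = idm i j /\ mulm k N M i j = idm i j.

(* M^{-1} (meaningful when M is invertible) *)
Definition invm (k : nat) (M : mat) : mat :=
  epsilon (inhabits (fun _ _ => 0)) (is_inverse k M).

Inductive Rbar := Fin (r : R) | PInf.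

Definition Rbar_le (a b : Rbar) : Prop :=
  match a, b with
  | Fin x, Fin y => x <= y
  | _, PInf => True
  | PInf, Fin _ => False
  end.

Definition Rbar_max (a b : Rbar) : Rbar :=
  match a, b with
  | Fin x, Fin y => Fin (Rmax x y)
  | _, _ => PInf
  end.

Definition is_glb_Rbar (S : Rbar -> Prop) (l : Rbar) : Prop :=
  (forall v, S v -> Rbar_le l v) /\
  (forall l', (forall v, S v -> Rbar_le l' v) -> Rbar_le l' l).

Definition Rbar_cv (u : nat -> Rbar) (l : Rbar) : Prop :=
  match l with
  | Fin l0 => forall eps, eps > 0 -> exists N, forall k, (k >= N)%nat ->
                exists v, u k = Fin v /\ Rabs (v - l0) < eps
  | PInf => forall M, exists N, forall k, (k >= N)%nat ->
                u k = PInf \/ exists v, u k = Fin v /\ v > M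
  end.

(* the quotient a/b with conventions 0/0 = 0, c/0 = oo for c > 0 *)
Definition quot (a b : R) : Rbar :=
  if Req_dec_T b 0 then (if Req_dec_T a 0 then Fin 0 else PInf)
  else Fin (a / b).

(* max over i < k of g i (all values are >= 0 in our uses, so the base 0
   is harmless; k >= 1 in the theorem) *)
Fixpoint Rbar_maxn (k : nat) (g : nat -> Rbar) : Rbar :=
  match k with O => Fin 0 | S k' => Rbar_max (Rbar_maxn k' g) (g k') end.

Definition rAB (m n : nat) (A B : mat) (x : vec) : Rbar :=
  Rbar_maxn m (fun i => quot (mulv n A x i) (mulv n B x i)).

Definition vpos (n : nat) (x : vec) : Prop := forall j, (j < n)%nat -> 0 < x j.
Definition vnonneg (n : nat) (x : vec) : Prop := forall j, (j < n)%nat -> 0 <= x j.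
Definition vnonzero (n : nat) (x : vec) : Prop := exists j, (j < n)%nat /\ x j <> 0.

Definition rhoAB (m n : nat) (A B : mat) : Rbar :=
  epsilon (inhabits PInf)
    (is_glb_Rbar (fun v => exists x, vpos n x /\ v = rAB m n A B x)).

Definition in_Pi (n : nat) (y : vec) : Prop := vnonneg n y /\ rsum n y = 1.

Definition optimal (m n : nat) (A B : mat) (y : vec) : Prop :=
  vnonneg n y /\ vnonzero n y /\
  rAB m n A B y = rhoAB m n A B /\
  exists ys : nat -> vec,
    (forall k, vpos n (ys k)) /\
    (forall j, (j < n)%nat -> Un_cv (fun k => ys k j) (y j)) /\
    Rbar_cv (fun k => rAB m n A B (ys k)) (rhoAB m n A B).

Definition supp_strict_sub (n : nat) (z y : vec) : Prop :=
  (forall j, (j < n)%nat -> z j <> 0 -> y j <> 0) /\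
  (exists j, (j < n)%nat /\ y j <> 0 /\ z j = 0).

Definition minimal_optimal (m n : nat) (A B : mat) (y : vec) : Prop :=
  optimal m n A B y /\
  ~ (exists z, optimal m n A B z /\ supp_strict_sub n z y).

Definition GPF_eigenvector (m n : nat) (A B : mat) (y : vec) : Prop :=
  vnonneg n y /\ vnonzero n y /\
  exists r, rhoAB m n A B = Fin r /\
    forall i, (i < m)%nat -> mulv n A y i = r * mulv n B y i.

(* z : nat -> R*R is a complex vector; (a,b) is an eigenvalue of the real
   k x k matrix C *)
Definition is_eigenvalue (k : nat) (C : mat) (a b : R) : Prop :=
  exists z : nat -> R * R,
    (exists i, (i < k)%nat /\ z i <> (0, 0)) /\
    forall i, (i < k)%nat ->
      rsum k (fun l => C i l * fst (z l)) = a * fst (z i) - b * snd (z i) /\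
      rsum k (fun l => C i l * snd (z l)) = a * snd (z i) + b * fst (z i).

Definition is_spectral_radius (k : nat) (C : mat) (r : R) : Prop :=
  (exists a b, is_eigenvalue k C a b /\ r = sqrt (a * a + b * b)) /\
  (forall a b, is_eigenvalue k C a b -> sqrt (a * a + b * b) <= r).

Definition spectral_radius (k : nat) (C : mat) : R :=
  epsilon (inhabits 0) (is_spectral_radius k C).

Definition exactly_one_pos_row (k : nat) (M : mat) (i : nat) : Prop :=
  exists j, (j < k)%nat /\ 0 < M i j /\
    forall j', (j' < k)%nat -> 0 < M i j' -> j' = j.

Definition exactly_one_pos_col (k : nat) (M : mat) (j : nat) : Prop :=
  exists i, (i < k)%nat /\ 0 < M i j /\
    forall i', (i' < k)%nat -> 0 < M i' j -> i' = i.

Definition monomial (k : nat) (M : mat) : Prop :=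
  (forall i j, (i < k)%nat -> (j < k)%nat -> 0 <= M i j) /\
  (forall i, (i < k)%nat -> exactly_one_pos_row k M i) /\
  (forall j, (j < k)%nat -> exactly_one_pos_col k M j).

Definition digraph_edge (k : nat) (M : mat) : relation nat :=
  fun i j => (i < k)%nat /\ (j < k)%nat /\ 0 < M i j.

Definition irreducible (k : nat) (M : mat) : Prop :=
  forall i j, (i < k)%nat -> (j < k)%nat ->
    clos_refl_trans nat (digraph_edge k M) i j.

(* A subset K of [n] (0-based: {0,...,n-1}) is represented by the strictly
   increasing list of its elements. *)
Definition subset_list (n : nat) (K : list nat) : Prop :=
  StronglySorted lt K /\ (forall j, In j K -> (j < n)%nat).

Definition colsub (F : mat) (K : list nat) : mat :=
  fun i l => F i (nth l K O).

Definition in_MB (m n : nat) (B : mat) (K : list nat) : Prop :=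
  subset_list n K /\ length K = m /\ monomial m (colsub B K).

Definition CK (m : nat) (A B : mat) (K : list nat) : mat :=
  mulm m (invm m (colsub B K)) (colsub A K).

Definition WN_pair (m n : nat) (A B : mat) : Prop :=
  (forall i j, (i < m)%nat -> (j < n)%nat -> 0 <= A i j /\ 0 <= B i j) /\
  (m <= n)%nat /\
  (forall i, (i < m)%nat -> exists j, (j < n)%nat /\ B i j <> 0) /\
  (forall j, (j < n)%nat -> exactly_one_pos_col m B j).

Definition S_irreducible (m n : nat) (A B : mat) : Prop :=
  forall K, in_MB m n B K -> irreducible m (CK m A B K).

Definition supp_in (n : nat) (y : vec) (K : list nat) : Prop :=
  forall j, (j < n)%nat -> y j <> 0 -> In j K.

From Stdlib Require Import Reals Lra Lia List Relations Sorted ClassicalEpsilon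
  FunctionalExtensionality PropExtensionality.
Open Scope R_scope.

(* Write [cw M] for the Collatz–Wielandt number [inf {t | M z <= t z for some z > 0}]. For
   [M >= 0] it is the spectral radius and is attained by a nonnegative eigenvector (Perron–Frobenius,
   via positive perturbations of [M]).
   Every column of [B] has a single positive entry, so choosing in each row [i] one column owned
   by [i] (a section [kap]) reduces the pair to the square matrix [M_kap = A_K D^-1], similar to
   [B_K^-1 A_K] for the column set [K] of [kap]. Lifting sub-eigenvectors of [M_kap] to [R^n] gives
   [rho(A,B) <= cw M_kap]. Conversely, for a section minimizing [cw M_kap] with left Perron vector
   [w], the row vector [w^T A] dominates [cw M_kap * w^T B] (otherwise exchanging one column would
   lower the minimum), so [r(A,B,x) >= cw M_kap] for all [x > 0]; nonnegative [A] is reduced to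
   positive [A] by perturbation, using that there are finitely many sections.
   The normalized lift of the Perron vector of a minimizing [M_kap] is an optimal GPF-eigenvector.
   When [B_K^-1 A_K] is irreducible, a nonnegative sub-eigenvector with one zero entry vanishes;
   an optimal vector with smaller support would yield one, which gives minimality. *)

Lemma Rdiv_le_iff a b t : 0 < b -> (a / b <= t <-> a <= t * b).
Proof.
  intros Hb. assert (E : a = a / b * b) by (field; lra).
  split; intros H.
  - rewrite E. apply Rmult_le_compat_r; lra.
  - apply (Rmult_le_reg_r b); auto. rewrite <- E. exact H.
Qed.

Lemma Rdiv_lt_iff a b t : 0 < b -> (a / b < t <-> a < t * b).
Proof.
  intros Hb. assert (E : a = a / b * b) by (field; lra).
  split; intros H.
  - rewrite E. apply Rmult_lt_compat_r; lra.
  - apply (Rmult_lt_reg_r b); auto. rewrite <- E. exact H.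
Qed.

Lemma Rle_div_iff a b t : 0 < b -> (t <= a / b <-> t * b <= a).
Proof.
  intros Hb. assert (E : a = a / b * b) by (field; lra).
  split; intros H.
  - rewrite E. apply Rmult_le_compat_r; lra.
  - apply (Rmult_le_reg_r b); auto. rewrite <- E. exact H.
Qed.


Lemma rsum_ext k f g : (forall i, (i < k)%nat -> f i = g i) -> rsum k f = rsum k g.
Proof.
  induction k; simpl; intros H; auto.
  rewrite IHk, (H k); auto; try lia; intros; apply H; lia.
Qed.

Lemma rsum_plus k f g : rsum k (fun i => f i + g i) = rsum k f + rsum k g.
Proof. induction k; simpl; [lra|]. rewrite IHk; lra. Qed.

Lemma rsum_scal_l k c f : rsum k (fun i => c * f i) = c * rsum k f.
Proof. induction k; simpl; [lra|]. rewrite IHk; lra. Qed.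

Lemma rsum_scal_r k c f : rsum k (fun i => f i * c) = rsum k f * c.
Proof. induction k; simpl; [lra|]. rewrite IHk; lra. Qed.

Lemma rsum_zero k f : (forall i, (i < k)%nat -> f i = 0) -> rsum k f = 0.
Proof. induction k; simpl; intros H; auto. rewrite IHk, (H k); try lra; try lia; intros; apply H; lia. Qed.

Lemma rsum_le k f g : (forall i, (i < k)%nat -> f i <= g i) -> rsum k f <= rsum k g.
Proof.
  induction k; simpl; intros H; [lra|].
  assert (f k <= g k) by (apply H; lia).
  assert (rsum k f <= rsum k g) by (apply IHk; intros; apply H; lia). lra.
Qed.

Lemma rsum_nonneg k f : (forall i, (i < k)%nat -> 0 <= f i) -> 0 <= rsum k f.
Proof.
  intros H. rewrite <- (rsum_zero k (fun _ => 0)) by auto. apply rsum_le; auto.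
Qed.

Lemma rsum_lt k f g i0 : (i0 < k)%nat -> (forall i, (i < k)%nat -> f i <= g i) ->
  f i0 < g i0 -> rsum k f < rsum k g.
Proof.
  induction k; simpl; intros Hi0 Hle Hlt; [lia|].
  assert (f k <= g k) by (apply Hle; lia).
  destruct (Nat.eq_dec i0 k) as [->|Hne].
  - assert (rsum k f <= rsum k g) by (apply rsum_le; intros; apply Hle; lia). lra.
  - assert (rsum k f < rsum k g) by (apply IHk; auto; try lia; intros; apply Hle; lia). lra.
Qed.

Lemma rsum_pos k f i0 : (i0 < k)%nat -> (forall i, (i < k)%nat -> 0 <= f i) -> 0 < f i0 ->
  0 < rsum k f.
Proof.
  intros Hi0 Hnn Hpos. rewrite <- (rsum_zero k (fun _ => 0)) by auto.
  apply rsum_lt with i0; auto.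
Qed.

Lemma rsum_ge_term k f i0 : (i0 < k)%nat -> (forall i, (i < k)%nat -> 0 <= f i) ->
  f i0 <= rsum k f.
Proof.
  induction k; simpl; intros Hi0 Hnn; [lia|].
  assert (0 <= f k) by (apply Hnn; lia).
  destruct (Nat.eq_dec i0 k) as [->|Hne].
  - assert (0 <= rsum k f) by (apply rsum_nonneg; intros; apply Hnn; lia). lra.
  - assert (f i0 <= rsum k f) by (apply IHk; try lia; intros; apply Hnn; lia). lra.
Qed.

Lemma rsum_single k f l0 : (l0 < k)%nat -> (forall i, (i < k)%nat -> i <> l0 -> f i = 0) ->
  rsum k f = f l0.
Proof.
  induction k; simpl; intros Hl0 H0; [lia|].
  destruct (Nat.eq_dec l0 k) as [->|Hne].
  - rewrite rsum_zero; [lra|]. intros; apply H0; lia.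
  - rewrite IHk, (H0 k); try lra; try lia; auto; intros; apply H0; lia.
Qed.

Lemma rsum_swap a b (f : nat -> nat -> R) :
  rsum a (fun i => rsum b (fun j => f i j)) = rsum b (fun j => rsum a (fun i => f i j)).
Proof.
  induction a; simpl.
  - rewrite rsum_zero; auto.
  - rewrite IHa, <- rsum_plus. auto.
Qed.

Lemma rsum_reindex (m n : nat) (kap : nat -> nat) (g : nat -> R) :
  (forall i, (i < m)%nat -> (kap i < n)%nat) ->
  (forall i i', (i < m)%nat -> (i' < m)%nat -> kap i = kap i' -> i = i') ->
  (forall j, (j < n)%nat -> (forall i, (i < m)%nat -> kap i <> j) -> g j = 0) ->
  rsum n g = rsum m (fun i => g (kap i)).
Proof.
  intros Hrange Hinj Hout.
  set (ind := fun i j => if Nat.eq_dec (kap i) j then 1 else 0).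
  transitivity (rsum n (fun j => rsum m (fun i => ind i j * g j))).
  - apply rsum_ext. intros j Hj.
    destruct (classic (exists i, (i < m)%nat /\ kap i = j)) as [[i0 [Hi0 He]]|Hn].
    + rewrite (rsum_single m _ i0); auto.
      * unfold ind. destruct (Nat.eq_dec (kap i0) j); [ring|congruence].
      * intros i Hi Hne. unfold ind. destruct (Nat.eq_dec (kap i) j); [|ring].
        exfalso. apply Hne, Hinj; congruence.
    + rewrite Hout, rsum_zero; auto.
      * intros; ring.
      * intros i Hi He. apply Hn; eauto.
  - rewrite rsum_swap. apply rsum_ext. intros i Hi.
    rewrite (rsum_single n _ (kap i)); auto.
    + unfold ind. destruct (Nat.eq_dec (kap i) (kap i)); [ring|congruence].
    + intros j Hj Hne. unfold ind. destruct (Nat.eq_dec (kap i) j); [congruence|ring].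
Qed.

Lemma rsum_const_one k : rsum k (fun _ => 1) = INR k.
Proof. induction k; simpl rsum; [auto|]. rewrite IHk, (S_INR k); auto. Qed.

Lemma rsum_cv k (u : nat -> nat -> R) (l : nat -> R) :
  (forall i, (i < k)%nat -> Un_cv (fun N => u N i) (l i)) ->
  Un_cv (fun N => rsum k (u N)) (rsum k l).
Proof.
  induction k; simpl; intros H.
  - intros e He. exists O. intros. unfold Rdist. rewrite Rminus_diag, Rabs_R0; auto.
  - apply CV_plus; [apply IHk; intros; apply H; lia | apply H; lia].
Qed.

Lemma pos_entry_of_sum1 k v : vnonneg k v -> rsum k v = 1 -> exists l, (l < k)%nat /\ 0 < v l.
Proof.
  intros Hv Hsum. apply NNPP; intro Hn.
  assert (rsum k v <= rsum k (fun _ => 0)).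
  { apply rsum_le. intros i Hi. apply Rnot_lt_le. intro. apply Hn. eauto. }
  rewrite (rsum_zero k (fun _ => 0)) in H by auto. lra.
Qed.

Lemma finite_strict_bound k (f : nat -> R) c : (forall i, (i < k)%nat -> f i < c) ->
  exists t, t < c /\ forall i, (i < k)%nat -> f i <= t.
Proof.
  induction k; intros H.
  - exists (c - 1). split; [lra|]. intros; lia.
  - destruct IHk as [t [Ht1 Ht2]]; [intros; apply H; lia|].
    exists (Rmax t (f k)). split; [apply Rmax_lub_lt; auto; apply H; lia|].
    intros i Hi. destruct (Nat.eq_dec i k) as [->|Hne]; [apply Rmax_r|].
    eapply Rle_trans; [apply Ht2; lia | apply Rmax_l].
Qed.

Lemma finite_argmax k (f : nat -> R) : (1 <= k)%nat ->
  exists i0, (i0 < k)%nat /\ forall i, (i < k)%nat -> f i <= f i0.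
Proof.
  induction k; intros Hk; [lia|]. destruct (Nat.eq_dec k 0) as [->|Hk0].
  - exists O. split; [lia|]. intros i Hi. replace i with O by lia. lra.
  - destruct IHk as [i0 [Hi0 Hmax]]; [lia|]. destruct (Rle_dec (f k) (f i0)).
    + exists i0. split; [lia|]. intros i Hi.
      destruct (Nat.eq_dec i k) as [->|]; auto. apply Hmax; lia.
    + exists k. split; [lia|]. intros i Hi.
      destruct (Nat.eq_dec i k) as [->|]; [lra|]. specialize (Hmax i ltac:(lia)). lra.
Qed.

Lemma cv_const c : Un_cv (fun _ => c) c.
Proof. intros e He; exists O; intros; unfold Rdist; rewrite Rminus_diag, Rabs_R0; auto. Qed.

Lemma cv_ext u v l : (forall N, u N = v N) -> Un_cv u l -> Un_cv v l.
Proof. intros H Hu e He. destruct (Hu e He) as [N HN]. exists N; intros. rewrite <- H; auto. Qed.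

Lemma inv_succ_pos N : 0 < / INR (S N).
Proof. apply Rinv_0_lt_compat, lt_0_INR; lia. Qed.

Lemma inv_succ_small e : e > 0 -> exists N0, forall N, (N >= N0)%nat -> / INR (S N) < e.
Proof.
  intros He. destruct (archimed_cor1 e He) as [N0 [HN1 HN2]].
  exists N0. intros N HN. apply Rle_lt_trans with (/ INR N0); auto.
  apply Rinv_le_contravar; [apply lt_0_INR; lia | apply le_INR; lia].
Qed.

Lemma cv_inv_succ : Un_cv (fun N => / INR (S N)) 0.
Proof.
  intros e He. destruct (inv_succ_small e He) as [N0 HN0]. exists N0. intros N HN.
  unfold Rdist. rewrite Rminus_0_r, Rabs_right; auto. apply Rle_ge, Rlt_le, inv_succ_pos.
Qed.

Lemma cv_close (u v : nat -> R) l : (forall N, Rabs (u N - v N) <= / INR (S N)) ->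
  Un_cv v l -> Un_cv u l.
Proof.
  intros Hclose Hv e He. destruct (Hv (e/2)) as [N1 HN1]; [lra|].
  destruct (inv_succ_small (e/2)) as [N2 HN2]; [lra|].
  exists (max N1 N2). intros N HN. unfold Rdist in *.
  specialize (HN1 N ltac:(lia)). specialize (HN2 N ltac:(lia)). specialize (Hclose N).
  replace (u N - l) with ((u N - v N) + (v N - l)) by ring.
  eapply Rle_lt_trans; [apply Rabs_triang | lra].
Qed.

Definition strict_incr (phi : nat -> nat) := forall k, (phi k < phi (S k))%nat.

Lemma strict_incr_ge phi : strict_incr phi -> forall k, (k <= phi k)%nat.
Proof. intros H k; induction k; [lia|]. specialize (H k); lia. Qed.

Lemma strict_incr_comp phi psi : strict_incr phi -> strict_incr psi -> strict_incr (fun k => phi (psi k)).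
Proof.
  intros Hphi Hpsi k.
  assert (Hmono : forall a b, (a <= b)%nat -> (phi a <= phi b)%nat).
  { intros a b Hab; induction Hab; auto. specialize (Hphi m); lia. }
  specialize (Hpsi k). specialize (Hmono _ _ Hpsi). specialize (Hphi (psi k)). lia.
Qed.

Lemma cv_subseq u l phi : strict_incr phi -> Un_cv u l -> Un_cv (fun k => u (phi k)) l.
Proof.
  intros Hphi Hu e He. destruct (Hu e He) as [N HN]. exists N. intros k Hk.
  apply HN. pose proof (strict_incr_ge phi Hphi k). lia.
Qed.

Lemma unit_interval_cv_subseq (u : nat -> R) : (forall k, 0 <= u k <= 1) ->
  exists phi l, strict_incr phi /\ Un_cv (fun k => u (phi k)) l.
Proof.
  intros Hu.
  destruct (Bolzano_Weierstrass u (fun c => 0 <= c <= 1) (compact_P3 0 1) Hu) as [l Hl].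
  assert (G : forall N k : nat, {p : nat | (N <= p)%nat /\ Rabs (u p - l) < / INR (S k)}).
  { intros N k. apply constructive_indefinite_description.
    destruct (Hl (fun y => Rabs (y - l) < / INR (S k)) N) as [p Hp].
    - exists (mkposreal _ (inv_succ_pos k)). intros y Hy. exact Hy.
    - exists p; auto. }
  set (phi := fix f k := match k with
                         | O => proj1_sig (G O O)
                         | S k' => proj1_sig (G (S (f k')) k) end).
  assert (Hb : forall k, Rabs (u (phi k) - l) < / INR (S k)).
  { intros [|k]; [exact (proj2 (proj2_sig (G 0%nat 0%nat)))
                 | exact (proj2 (proj2_sig (G (S (phi k)) (S k))))]. }
  exists phi, l. split.
  - intros k. exact (proj1 (proj2_sig (G (S (phi k)) (S k)))).
  - apply (cv_close _ (fun _ => l)); [intros; apply Rlt_le, Hb | apply cv_const].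
Qed.

Lemma unit_cube_cv_subseq (n : nat) (u : nat -> vec) :
  (forall k j, (j < n)%nat -> 0 <= u k j <= 1) ->
  exists phi (v : vec), strict_incr phi /\
    forall j, (j < n)%nat -> Un_cv (fun k => u (phi k) j) (v j).
Proof.
  induction n; intros Hu.
  - exists (fun k => k), (fun _ => 0). split; [intros k; lia | intros; lia].
  - destruct IHn as [phi [v [Hphi Hv]]]; [intros; apply Hu; lia|].
    destruct (unit_interval_cv_subseq (fun k => u (phi k) n)) as [psi [l [Hpsi Hl]]];
      [intros; apply Hu; lia|].
    exists (fun k => phi (psi k)), (fun j => if Nat.eq_dec j n then l else v j). split.
    + apply strict_incr_comp; auto.
    + intros j Hj. destruct (Nat.eq_dec j n) as [->|Hne]; auto.
      apply (cv_subseq (fun k => u (phi k) j)); auto. apply Hv; lia.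
Qed.

Definition in_simplex (k : nat) (y : vec) : Prop := vpos k y /\ rsum k y = 1.

Lemma simplex_cv_subseq k (y : nat -> vec) : (forall N, in_simplex k (y N)) ->
  exists phi v, strict_incr phi /\ vnonneg k v /\ rsum k v = 1 /\
    forall j, (j < k)%nat -> Un_cv (fun N => y (phi N) j) (v j).
Proof.
  intros Hy. destruct (unit_cube_cv_subseq k y) as [phi [v [Hphi Hv]]].
  { intros N j Hj. destruct (Hy N) as [Hpos Hsum]. split; [apply Rlt_le, Hpos; auto|].
    rewrite <- Hsum. apply rsum_ge_term; auto. intros; apply Rlt_le, Hpos; auto. }
  exists phi, v. repeat split; auto.
  - intros j Hj. apply (@Rle_cv_lim (fun _ => 0) (fun N => y (phi N) j)); auto.
    + intros N. apply Rlt_le, (proj1 (Hy (phi N))); auto.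
    + apply cv_const.
  - apply (UL_sequence (fun N => rsum k (y (phi N)))); [apply rsum_cv; auto|].
    apply (cv_ext (fun _ => 1)); [intros N; symmetry; apply (Hy (phi N)) | apply cv_const].
Qed.

Lemma infinitely_often_in_list {T} (L : list T) (f : nat -> T) : (forall N, In (f N) L) ->
  exists x, In x L /\ forall N0, exists N, (N >= N0)%nat /\ f N = x.
Proof.
  revert f. induction L as [|a L IHL]; intros f Hf; [destruct (Hf O)|].
  destruct (classic (forall N0, exists N, (N >= N0)%nat /\ f N = a)) as [H|H].
  - exists a; split; [left|]; auto.
  - apply not_all_ex_not in H. destruct H as [N0 HN0].
    destruct (IHL (fun N => f (N + N0)%nat)) as [x [Hx Hinf]].
    + intros N. destruct (Hf (N + N0)%nat); auto.
      exfalso. apply HN0. exists (N + N0)%nat. split; [lia|auto].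
    + exists x. split; [right; auto|]. intros N1. destruct (Hinf N1) as [N [HN HfN]].
      exists (N + N0)%nat. split; [lia|auto].
Qed.

Lemma list_argmin {T} (L : list T) (f : T -> R) : L <> nil ->
  exists x, In x L /\ forall y, In y L -> f x <= f y.
Proof.
  induction L as [|a L IHL]; intros HL; [congruence|]. destruct L as [|b L].
  - exists a. split; [left; auto|]. intros y [<-|[]]; lra.
  - destruct IHL as [x [Hx Hmin]]; [discriminate|].
    destruct (Rle_dec (f a) (f x)).
    + exists a. split; [left; auto|]. intros y [<-|Hy]; [lra|]. specialize (Hmin y Hy); lra.
    + exists x. split; [right; auto|]. intros y [<-|Hy]; [lra|auto].
Qed.

(** * The Collatz–Wielandt number and Perron–Frobenius *)

Definition mnonneg (k : nat) (M : mat) := forall i l, (i < k)%nat -> (l < k)%nat -> 0 <= M i l.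
Definition mpos (k : nat) (M : mat) := forall i l, (i < k)%nat -> (l < k)%nat -> 0 < M i l.

Definition tr (M : mat) : mat := fun i l => M l i.

Definition cw_bound (k : nat) (M : mat) (t : R) : Prop :=
  exists z, vpos k z /\ forall i, (i < k)%nat -> mulv k M z i <= t * z i.

Definition is_inf (S : R -> Prop) (c : R) : Prop :=
  (forall t, S t -> c <= t) /\ (forall c', (forall t, S t -> c' <= t) -> c' <= c).

Definition cw (k : nat) (M : mat) : R := epsilon (inhabits 0) (is_inf (cw_bound k M)).

Lemma is_inf_exists (S : R -> Prop) : (exists t, S t) -> (forall t, S t -> 0 <= t) ->
  exists c, is_inf S c.
Proof.
  intros [t0 Ht0] Hlb.
  destruct (completeness (fun x => S (- x))) as [s [Hs1 Hs2]].
  - exists 0. intros x Hx. specialize (Hlb _ Hx). lra.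
  - exists (- t0). rewrite Ropp_involutive; auto.
  - exists (- s). split.
    + intros t Ht. assert (- t <= s) by (apply Hs1; rewrite Ropp_involutive; auto). lra.
    + intros c' Hc'. assert (s <= - c'); [|lra].
      apply Hs2. intros x Hx. specialize (Hc' _ Hx). lra.
Qed.

Lemma mulv_ext k M M' x x' i : (forall l, (l < k)%nat -> M i l = M' i l) ->
  (forall l, (l < k)%nat -> x l = x' l) -> mulv k M x i = mulv k M' x' i.
Proof. intros HM Hx. unfold mulv. apply rsum_ext. intros. rewrite HM, Hx; auto. Qed.

Lemma mulv_nonneg k M x i : (i < k)%nat -> mnonneg k M -> vnonneg k x -> 0 <= mulv k M x i.
Proof. intros. unfold mulv. apply rsum_nonneg. intros. apply Rmult_le_pos; auto. Qed.

Lemma mulv_scal k M c x i : mulv k M (fun l => c * x l) i = c * mulv k M x i.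
Proof. unfold mulv. rewrite <- rsum_scal_l. apply rsum_ext. intros; ring. Qed.

Lemma dot_mulv_tr k M (w v : vec) :
  rsum k (fun i => w i * mulv k M v i) = rsum k (fun l => v l * mulv k (tr M) w l).
Proof.
  unfold mulv, tr. transitivity (rsum k (fun i => rsum k (fun l => w i * M i l * v l))).
  - apply rsum_ext; intros. rewrite <- rsum_scal_l. apply rsum_ext; intros; ring.
  - rewrite rsum_swap. apply rsum_ext; intros. rewrite <- rsum_scal_l. apply rsum_ext; intros; ring.
Qed.

Lemma cw_bound_exists k M : mnonneg k M -> exists t, cw_bound k M t.
Proof.
  intros HM. exists (rsum k (fun i => rsum k (fun l => M i l))), (fun _ => 1). split.
  - intros j _; lra.
  - intros i Hi. rewrite Rmult_1_r. unfold mulv.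
    apply Rle_trans with (rsum k (fun l => M i l)); [right; apply rsum_ext; intros; ring|].
    apply (rsum_ge_term k (fun i => rsum k (fun l => M i l))); auto.
    intros. apply rsum_nonneg; intros; apply HM; auto.
Qed.

Lemma cw_bound_ge0 k M t : (1 <= k)%nat -> mnonneg k M -> cw_bound k M t -> 0 <= t.
Proof.
  intros Hk HM [z [Hz H]]. specialize (H O ltac:(lia)).
  pose proof (mulv_nonneg k M z O ltac:(lia) HM ltac:(intros j Hj; apply Rlt_le, Hz; auto)).
  specialize (Hz O ltac:(lia)). nra.
Qed.

Lemma cw_bound_normalize k M t : (1 <= k)%nat -> cw_bound k M t ->
  exists y, in_simplex k y /\ forall i, (i < k)%nat -> mulv k M y i <= t * y i.
Proof.
  intros Hk [z [Hz H]].
  assert (Hs : 0 < rsum k z) by (apply (rsum_pos k z O); auto; try lia; intros; apply Rlt_le; auto).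
  exists (fun l => / rsum k z * z l). split; [split|].
  - intros j Hj. apply Rmult_lt_0_compat; auto. apply Rinv_0_lt_compat; auto.
  - rewrite rsum_scal_l. field. lra.
  - intros i Hi. rewrite mulv_scal. specialize (H i Hi).
    assert (0 < / rsum k z) by (apply Rinv_0_lt_compat; auto). nra.
Qed.

Section CollatzWielandt.
Variables (k : nat) (M : mat).
Hypotheses (Hk : (1 <= k)%nat) (HM : mnonneg k M).

Lemma cw_is_inf : is_inf (cw_bound k M) (cw k M).
Proof.
  unfold cw. apply epsilon_spec, is_inf_exists; [apply cw_bound_exists; auto|].
  intros; eapply cw_bound_ge0; eauto.
Qed.

Lemma cw_le t : cw_bound k M t -> cw k M <= t.
Proof. apply cw_is_inf. Qed.

Lemma cw_ge0 : 0 <= cw k M.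
Proof. apply cw_is_inf. intros; eapply cw_bound_ge0; eauto. Qed.

Lemma cw_approx e : e > 0 -> exists t, cw_bound k M t /\ t < cw k M + e.
Proof.
  intros He. apply NNPP. intro Hn.
  assert (cw k M + e <= cw k M); [|lra].
  apply cw_is_inf. intros t Ht. apply Rnot_lt_le. intro. apply Hn. eauto.
Qed.

Lemma cw_limit_vec : exists v, vnonneg k v /\ rsum k v = 1 /\
  forall i, (i < k)%nat -> mulv k M v i <= cw k M * v i.
Proof.
  destruct (choice (fun N (p : R * vec) => fst p < cw k M + / INR (S N) /\ in_simplex k (snd p) /\
              forall i, (i < k)%nat -> mulv k M (snd p) i <= fst p * snd p i)) as [p Hp].
  { intros N. destruct (cw_approx (/ INR (S N)) (inv_succ_pos N)) as [t [Ht1 Ht2]].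
    destruct (cw_bound_normalize k M t Hk Ht1) as [y [Hy1 Hy2]].
    exists (t, y). simpl. auto. }
  assert (Ht : forall N, cw k M <= fst (p N)).
  { intros N. apply cw_le. destruct (Hp N) as [_ [[Hy _] Hy']]. exists (snd (p N)); auto. }
  destruct (simplex_cv_subseq k (fun N => snd (p N))) as [phi [v [Hphi [Hv1 [Hv2 Hv]]]]];
    [intros N; apply Hp|].
  assert (Htc : Un_cv (fun N => fst (p (phi N))) (cw k M)).
  { apply (cv_close _ (fun _ => cw k M)); [|apply cv_const].
    intros N. pose proof (strict_incr_ge phi Hphi N). specialize (Ht (phi N)).
    destruct (Hp (phi N)) as [Hlt _].
    assert (/ INR (S (phi N)) <= / INR (S N)).
    { apply Rinv_le_contravar; [apply lt_0_INR; lia | apply le_INR; lia]. }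
    rewrite Rabs_right; lra. }
  exists v. repeat split; auto. intros i Hi.
  apply (@Rle_cv_lim (fun N => mulv k M (snd (p (phi N))) i)
                     (fun N => fst (p (phi N)) * snd (p (phi N)) i)).
  - intros N. apply Hp; auto.
  - apply rsum_cv. intros. apply CV_mult; [apply cv_const | apply Hv; auto].
  - apply CV_mult; auto.
Qed.

End CollatzWielandt.

Lemma cw_mono k M M' : (1 <= k)%nat -> mnonneg k M ->
  (forall i l, (i < k)%nat -> (l < k)%nat -> M i l <= M' i l) -> cw k M <= cw k M'.
Proof.
  intros Hk HM HMM'. assert (HM' : mnonneg k M').
  { intros i l Hi Hl. eapply Rle_trans; [apply HM | apply HMM']; auto. }
  apply (cw_is_inf k M' Hk HM'). intros t [z [Hz Ht]]. apply cw_le; auto.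
  exists z. split; auto. intros i Hi. eapply Rle_trans; [|apply Ht; auto].
  unfold mulv. apply rsum_le. intros. apply Rmult_le_compat_r; [apply Rlt_le, Hz|apply HMM']; auto.
Qed.

Lemma cw_ext k M M' : (forall i l, (i < k)%nat -> (l < k)%nat -> M i l = M' i l) ->
  cw k M = cw k M'.
Proof.
  intros HMM'. unfold cw. replace (cw_bound k M) with (cw_bound k M'); auto.
  apply functional_extensionality. intros t. apply propositional_extensionality.
  unfold cw_bound. split; intros [z [Hz H1]]; exists z; split; auto; intros i Hi;
    rewrite <- H1 by auto; right; apply mulv_ext; auto; intros; rewrite HMM'; auto.
Qed.

(* For a positive matrix the limit vector of [cw_limit_vec] is an eigenvector: were [M v <= c v]
   strict somewhere, [M (M v) < c (M v)] everywhere and [c] would not be the infimum. *)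
Lemma perron_pos k M : (1 <= k)%nat -> mpos k M ->
  exists v, in_simplex k v /\ forall i, (i < k)%nat -> mulv k M v i = cw k M * v i.
Proof.
  intros Hk HM. assert (HMn : mnonneg k M) by (intros i l Hi Hl; apply Rlt_le, HM; auto).
  destruct (cw_limit_vec k M Hk HMn) as [v [Hv1 [Hv2 Hv3]]]. set (c := cw k M) in *.
  destruct (pos_entry_of_sum1 k v Hv1 Hv2) as [l0 [Hl0 Hvl0]].
  assert (HMv : forall i, (i < k)%nat -> 0 < mulv k M v i).
  { intros i Hi. apply (rsum_pos k _ l0); auto.
    - intros; apply Rmult_le_pos; [apply HMn|]; auto.
    - apply Rmult_lt_0_compat; auto. }
  assert (Heq : forall i, (i < k)%nat -> mulv k M v i = c * v i).
  { apply NNPP. intro Hn. apply not_all_ex_not in Hn. destruct Hn as [i0 Hi0].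
    apply imply_to_and in Hi0. destruct Hi0 as [Hi0 Hne].
    assert (Hlt : mulv k M v i0 < c * v i0) by (specialize (Hv3 i0 Hi0); lra).
    set (w := mulv k M v).
    assert (Hw : forall i, (i < k)%nat -> mulv k M w i < c * w i).
    { intros i Hi. unfold w at 2. rewrite <- mulv_scal. apply (rsum_lt k _ _ i0); auto.
      - intros. apply Rmult_le_compat_l; [apply HMn | apply Hv3]; auto.
      - apply Rmult_lt_compat_l; auto. }
    destruct (finite_strict_bound k (fun i => mulv k M w i / w i) c) as [t [Ht1 Ht2]].
    { intros i Hi. specialize (Hw i Hi). specialize (HMv i Hi).
      apply Rdiv_lt_iff; auto. }
    assert (cw_bound k M t).
    { exists w. split; [intros j Hj; apply HMv; auto|]. intros i Hi.
      specialize (Ht2 i Hi). apply Rdiv_le_iff in Ht2; auto. }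
    pose proof (cw_le k M Hk HMn t H). unfold c in Ht1. lra. }
  exists v. split; [split|]; auto.
  intros j Hj. specialize (HMv j Hj). rewrite Heq in HMv by auto. specialize (Hv1 j Hj).
  pose proof (cw_ge0 k M Hk HMn). fold c in H. nra.
Qed.

Definition shift (M : mat) (e : R) : mat := fun i l => M i l + e.

Lemma mulv_shift k M e x i : mulv k (shift M e) x i = mulv k M x i + e * rsum k x.
Proof. unfold mulv, shift. rewrite <- rsum_scal_l, <- rsum_plus. apply rsum_ext; intros; ring. Qed.

Lemma cw_bound_shift k M t : (1 <= k)%nat -> cw_bound k M t ->
  exists D, 0 <= D /\ forall e, 0 <= e -> cw_bound k (shift M e) (t + e * D).
Proof.
  intros Hk [z [Hz H]].
  set (D := rsum k (fun i => rsum k z / z i)).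
  assert (Hsz : 0 < rsum k z) by (apply (rsum_pos k z O); auto; try lia; intros; apply Rlt_le; auto).
  assert (HD : forall i, (i < k)%nat -> rsum k z <= D * z i).
  { intros i Hi. apply Rdiv_le_iff; auto.
    apply (rsum_ge_term k (fun i => rsum k z / z i)); auto.
    intros. apply Rlt_le, Rdiv_lt_0_compat; auto. }
  exists D. split.
  - specialize (HD O ltac:(lia)). specialize (Hz O ltac:(lia)). nra.
  - intros e He. exists z. split; auto. intros i Hi. rewrite mulv_shift.
    specialize (H i Hi). specialize (HD i Hi). nra.
Qed.

Lemma cw_shift_cv k M : (1 <= k)%nat -> mnonneg k M ->
  Un_cv (fun N => cw k (shift M (/ INR (S N)))) (cw k M).
Proof.
  intros Hk HM e He.
  destruct (cw_approx k M Hk HM (e/2)) as [t [Ht1 Ht2]]; [lra|].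
  destruct (cw_bound_shift k M t Hk Ht1) as [D [HD0 HD]].
  destruct (inv_succ_small (e / 2 / (D + 1))) as [N0 HN0]; [apply Rdiv_lt_0_compat; lra|].
  exists N0. intros N HN. unfold Rdist.
  pose proof (inv_succ_pos N) as Hep.
  assert (Hlow : cw k M <= cw k (shift M (/ INR (S N)))).
  { apply cw_mono; auto. intros i l Hi Hl. unfold shift. lra. }
  assert (cw k (shift M (/ INR (S N))) <= t + / INR (S N) * D).
  { apply cw_le; auto; [|apply HD; lra].
    intros i l Hi Hl. unfold shift. specialize (HM i l Hi Hl). lra. }
  assert (HxD : / INR (S N) * (D + 1) < e / 2).
  { specialize (HN0 N HN). apply (Rmult_lt_compat_r (D + 1)) in HN0; [|lra].
    replace (e / 2 / (D + 1) * (D + 1)) with (e / 2) in HN0 by (field; lra). exact HN0. }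
  rewrite Rmult_plus_distr_l, Rmult_1_r in HxD. rewrite Rabs_right; lra.
Qed.

(* Perron–Frobenius for a nonnegative matrix, obtained from the positive matrices [M + 1/(N+1)];
   the positive vectors [zs N] with [M zs N <= ts N * zs N] approximate the eigenvector. *)
Lemma perron_nonneg k M : (1 <= k)%nat -> mnonneg k M ->
  exists v (zs : nat -> vec) (ts : nat -> R),
    vnonneg k v /\ rsum k v = 1 /\ (forall i, (i < k)%nat -> mulv k M v i = cw k M * v i) /\
    (forall N, vpos k (zs N)) /\
    (forall N i, (i < k)%nat -> mulv k M (zs N) i <= ts N * zs N i) /\
    Un_cv ts (cw k M) /\ (forall j, (j < k)%nat -> Un_cv (fun N => zs N j) (v j)).
Proof.
  intros Hk HM. set (cN := fun N => cw k (shift M (/ INR (S N)))).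
  destruct (choice (fun N y => in_simplex k y /\
     forall i, (i < k)%nat -> mulv k (shift M (/ INR (S N))) y i = cN N * y i)) as [y Hy].
  { intros N. apply perron_pos; auto. intros i l Hi Hl. unfold shift.
    specialize (HM i l Hi Hl). pose proof (inv_succ_pos N). lra. }
  assert (HMy : forall N i, (i < k)%nat -> mulv k M (y N) i = cN N * y N i - / INR (S N)).
  { intros N i Hi. destruct (Hy N) as [[_ Hsum] Heig].
    rewrite <- Heig, mulv_shift, Hsum by auto. ring. }
  destruct (simplex_cv_subseq k y) as [phi [v [Hphi [Hv1 [Hv2 Hv]]]]]; [apply Hy|].
  assert (Hcv : Un_cv (fun N => cN (phi N)) (cw k M))
    by (apply cv_subseq; auto; apply cw_shift_cv; auto).
  exists v, (fun N => y (phi N)), (fun N => cN (phi N)). repeat split; auto.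
  - intros i Hi. apply (UL_sequence (fun N => mulv k M (y (phi N)) i)).
    + apply rsum_cv. intros. apply CV_mult; [apply cv_const | apply Hv; auto].
    + apply (cv_ext (fun N => cN (phi N) * y (phi N) i - / INR (S (phi N)))).
      * intros N; symmetry; apply HMy; auto.
      * replace (cw k M * v i) with (cw k M * v i - 0) by ring.
        apply CV_minus; [apply CV_mult; auto|].
        apply (cv_subseq (fun N => / INR (S N))); auto. apply cv_inv_succ.
  - intros N. apply (Hy (phi N)).
  - intros N i Hi. rewrite HMy by auto. pose proof (inv_succ_pos (phi N)). lra.
Qed.

(* Pairing [M v = lam v] with [tr M w <= mu w] through [w . M v = v . tr M w]. *)
Lemma eigval_le_left k M v w lam mu : (1 <= k)%nat -> vpos k v -> vpos k w ->
  (forall i, (i < k)%nat -> mulv k M v i = lam * v i) ->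
  (forall l, (l < k)%nat -> mulv k (tr M) w l <= mu * w l) ->
  lam <= mu /\ ((exists l0, (l0 < k)%nat /\ mulv k (tr M) w l0 < mu * w l0) -> lam < mu).
Proof.
  intros Hk Hv Hw Hright Hleft.
  assert (Hwv : 0 < rsum k (fun i => w i * v i)).
  { apply (rsum_pos k _ O); [lia | | apply Rmult_lt_0_compat; [apply Hw|apply Hv]; lia].
    intros; apply Rmult_le_pos; apply Rlt_le; auto. }
  assert (E : lam * rsum k (fun i => w i * v i) = rsum k (fun l => v l * mulv k (tr M) w l)).
  { rewrite <- dot_mulv_tr, <- rsum_scal_l. apply rsum_ext. intros; rewrite Hright; auto; ring. }
  assert (Hle : forall l, (l < k)%nat -> v l * mulv k (tr M) w l <= mu * (w l * v l)).
  { intros l Hl. specialize (Hleft l Hl). specialize (Hv l Hl). nra. }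
  split.
  - apply (rsum_le k) in Hle. rewrite rsum_scal_l in Hle.
    apply (Rmult_le_reg_r (rsum k (fun i => w i * v i))); lra.
  - intros [l0 [Hl0 Hlt]].
    assert (Hs : rsum k (fun l => v l * mulv k (tr M) w l) < rsum k (fun l => mu * (w l * v l))).
    { apply (rsum_lt k _ _ l0); auto. specialize (Hv l0 Hl0). nra. }
    rewrite rsum_scal_l in Hs. apply (Rmult_lt_reg_r (rsum k (fun i => w i * v i))); lra.
Qed.

Lemma perron_pos_tr k M : (1 <= k)%nat -> mpos k M ->
  exists w, vpos k w /\ forall l, (l < k)%nat -> mulv k (tr M) w l = cw k M * w l.
Proof.
  intros Hk HM.
  destruct (perron_pos k M Hk HM) as [v [[Hv _] Hveig]].
  destruct (perron_pos k (tr M) Hk ltac:(intros i l Hi Hl; apply HM; auto)) as [w [[Hw _] Hweig]].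
  assert (cw k M <= cw k (tr M)).
  { apply (eigval_le_left k M v w); auto. intros l Hl. rewrite Hweig; auto; lra. }
  assert (cw k (tr M) <= cw k M).
  { apply (eigval_le_left k (tr M) w v); auto. intros l Hl.
    change (mulv k (tr (tr M)) v l) with (mulv k M v l). rewrite Hveig; auto; lra. }
  exists w. split; auto. intros l Hl. rewrite Hweig; auto. f_equal. lra.
Qed.

Definition cnorm (x y : R) := sqrt (x * x + y * y).

Lemma cnorm_ge0 x y : 0 <= cnorm x y.
Proof. apply sqrt_pos. Qed.

Lemma cnorm_sq x y : cnorm x y * cnorm x y = x * x + y * y.
Proof. unfold cnorm. apply sqrt_sqrt. nra. Qed.

Lemma cnorm_pos x y : (x, y) <> (0, 0) -> 0 < cnorm x y.
Proof.
  intros Hxy. destruct (Rle_lt_or_eq_dec 0 (cnorm x y) (cnorm_ge0 x y)) as [|E]; auto.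
  exfalso. pose proof (cnorm_sq x y) as Hsq. rewrite <- E in Hsq. apply Hxy. f_equal; nra.
Qed.

Lemma cnorm_triangle x1 y1 x2 y2 : cnorm (x1 + x2) (y1 + y2) <= cnorm x1 y1 + cnorm x2 y2.
Proof.
  pose proof (cnorm_ge0 x1 y1). pose proof (cnorm_ge0 x2 y2).
  pose proof (cnorm_sq x1 y1). pose proof (cnorm_sq x2 y2).
  assert (Hcs : x1 * x2 + y1 * y2 <= cnorm x1 y1 * cnorm x2 y2).
  { destruct (Rle_dec (x1 * x2 + y1 * y2) 0); [nra|].
    apply Rsqr_incr_0_var; [|apply Rmult_le_pos; auto]. unfold Rsqr.
    replace (cnorm x1 y1 * cnorm x2 y2 * (cnorm x1 y1 * cnorm x2 y2))
      with ((cnorm x1 y1 * cnorm x1 y1) * (cnorm x2 y2 * cnorm x2 y2)) by ring.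
    rewrite H1, H2. pose proof (Rle_0_sqr (x1 * y2 - x2 * y1)). unfold Rsqr in *. nra. }
  unfold cnorm at 1. rewrite <- (sqrt_square (cnorm x1 y1 + cnorm x2 y2)) by lra.
  apply sqrt_le_1_alt. nra.
Qed.

Lemma cnorm_scal c x y : 0 <= c -> cnorm (c * x) (c * y) = c * cnorm x y.
Proof.
  intros Hc. unfold cnorm.
  replace (c * x * (c * x) + c * y * (c * y)) with ((c * c) * (x * x + y * y)) by ring.
  rewrite sqrt_mult by nra. rewrite sqrt_square; auto.
Qed.

Lemma cnorm_mult a b x y : cnorm (a * x - b * y) (a * y + b * x) = cnorm a b * cnorm x y.
Proof. unfold cnorm. rewrite <- sqrt_mult by nra. f_equal. ring. Qed.

Lemma cnorm_rsum k f g : cnorm (rsum k f) (rsum k g) <= rsum k (fun l => cnorm (f l) (g l)).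
Proof.
  induction k; simpl.
  - unfold cnorm. replace (0 * 0 + 0 * 0) with 0 by ring. rewrite sqrt_0; lra.
  - eapply Rle_trans; [apply cnorm_triangle | lra].
Qed.

(* Compare [|z_i|] with the positive vector [x]: at an index maximizing [|z_i| / x_i] the
   eigen-equation and [C x <= t x] give [|lambda| <= t]. *)
Lemma eigenvalue_cnorm_le k C a b t x : (1 <= k)%nat -> mnonneg k C -> is_eigenvalue k C a b ->
  vpos k x -> (forall i, (i < k)%nat -> mulv k C x i <= t * x i) -> cnorm a b <= t.
Proof.
  intros Hk HC [z [[j [Hj Hzj]] Hz]] Hx Ht.
  set (nz := fun l => cnorm (fst (z l)) (snd (z l))).
  destruct (finite_argmax k (fun i => nz i / x i) Hk) as [i0 [Hi0 Hmax]].
  set (s := nz i0 / x i0) in *.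
  assert (Hzl : forall l, (l < k)%nat -> nz l <= s * x l).
  { intros l Hl. apply Rdiv_le_iff; auto. }
  assert (Hs : 0 < s).
  { eapply Rlt_le_trans; [|apply (Hmax j Hj)]. apply Rdiv_lt_0_compat; auto.
    apply cnorm_pos. destruct (z j); auto. }
  assert (Hz0 : nz i0 = s * x i0) by (unfold s; field; specialize (Hx i0 Hi0); lra).
  destruct (Hz i0 Hi0) as [H1 H2].
  assert (cnorm a b * nz i0 <= s * (t * x i0)).
  { unfold nz. rewrite <- cnorm_mult, <- H1, <- H2.
    eapply Rle_trans; [apply cnorm_rsum|].
    apply Rle_trans with (rsum k (fun l => C i0 l * (s * x l))).
    - apply rsum_le. intros l Hl. rewrite cnorm_scal by (apply HC; auto).
      apply Rmult_le_compat_l; [apply HC | apply Hzl]; auto.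
    - apply Rle_trans with (s * mulv k C x i0); [|apply Rmult_le_compat_l; [lra | apply Ht; auto]].
      right. unfold mulv. rewrite <- rsum_scal_l. apply rsum_ext; intros; ring. }
  rewrite Hz0 in H. specialize (Hx i0 Hi0).
  apply (Rmult_le_reg_r (s * x i0)); [apply Rmult_lt_0_compat|]; lra.
Qed.

Lemma spectral_radius_eq k C c : (1 <= k)%nat -> mnonneg k C -> 0 <= c ->
  (exists v, vnonneg k v /\ vnonzero k v /\ forall i, (i < k)%nat -> mulv k C v i = c * v i) ->
  (forall t, t > c -> cw_bound k C t) ->
  spectral_radius k C = c.
Proof.
  intros Hk HC Hc [v [Hv1 [[j [Hj Hvj]] Hv3]]] Hup.
  assert (Hsr : is_spectral_radius k C c).
  { split.
    - exists c, 0. split.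
      + exists (fun l => (v l, 0)). split.
        * exists j. split; auto. intro Heq. inversion Heq. auto.
        * intros i Hi. simpl. split.
          -- rewrite <- Hv3 by auto. unfold mulv. ring.
          -- rewrite rsum_zero; [ring | intros; ring].
      + replace (c * c + 0 * 0) with (c * c) by ring. rewrite sqrt_square; auto.
    - intros a b Hab. apply Rnot_lt_le. intro Hlt.
      destruct (Hup ((c + sqrt (a * a + b * b)) / 2)) as [x [Hx Hxt]]; [lra|].
      pose proof (eigenvalue_cnorm_le k C a b _ x Hk HC Hab Hx Hxt). unfold cnorm in H. lra. }
  unfold spectral_radius.
  assert (Hex : is_spectral_radius k C (epsilon (inhabits 0) (is_spectral_radius k C)))
    by (apply epsilon_spec; eauto).
  destruct Hex as [[a [b [Hab Heq]]] Hb]. destruct Hsr as [[a' [b' [Hab' Heq']]] Hb'].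
  specialize (Hb _ _ Hab'). specialize (Hb' _ _ Hab). lra.
Qed.

Lemma Rbar_le_trans a b c : Rbar_le a b -> Rbar_le b c -> Rbar_le a c.
Proof. destruct a, b, c; simpl; intros; auto; try lra; contradiction. Qed.

Lemma Rbar_le_antisym a c : Rbar_le a (Fin c) -> Rbar_le (Fin c) a -> a = Fin c.
Proof. destruct a; simpl; intros; [f_equal; lra | contradiction]. Qed.

Lemma Rbar_max_l a b : Rbar_le a (Rbar_max a b).
Proof. destruct a, b; simpl; auto. apply Rmax_l. Qed.

Lemma Rbar_max_r a b : Rbar_le b (Rbar_max a b).
Proof. destruct a, b; simpl; auto. apply Rmax_r. Qed.

Lemma Rbar_maxn_le k g t : 0 <= t -> (forall i, (i < k)%nat -> Rbar_le (g i) (Fin t)) ->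
  Rbar_le (Rbar_maxn k g) (Fin t).
Proof.
  induction k; simpl; intros Ht H; auto.
  assert (H1 : Rbar_le (Rbar_maxn k g) (Fin t)) by (apply IHk; auto).
  assert (H2 : Rbar_le (g k) (Fin t)) by (apply H; lia).
  destruct (Rbar_maxn k g), (g k); simpl in *; auto. apply Rmax_lub; auto.
Qed.

Lemma Rbar_maxn_le_inv k g t i : (i < k)%nat -> Rbar_le (Rbar_maxn k g) (Fin t) ->
  Rbar_le (g i) (Fin t).
Proof.
  induction k; simpl; intros Hi H; [lia|]. destruct (Nat.eq_dec i k) as [->|].
  - eapply Rbar_le_trans; [apply Rbar_max_r | eauto].
  - apply IHk; [lia|]. eapply Rbar_le_trans; [apply Rbar_max_l | eauto].
Qed.

Lemma Rbar_maxn_ge k g a i : (i < k)%nat -> Rbar_le a (g i) -> Rbar_le a (Rbar_maxn k g).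
Proof.
  induction k; simpl; intros Hi H; [lia|]. destruct (Nat.eq_dec i k) as [->|].
  - eapply Rbar_le_trans; [eauto | apply Rbar_max_r].
  - eapply Rbar_le_trans; [apply IHk; eauto; lia | apply Rbar_max_l].
Qed.

Lemma quot_fin a b : 0 < b -> quot a b = Fin (a / b).
Proof. intros. unfold quot. destruct (Req_dec_T b 0); auto. lra. Qed.

Lemma quot_le_inv a b t : 0 <= a -> 0 <= b -> Rbar_le (quot a b) (Fin t) -> a <= t * b.
Proof.
  intros Ha Hb H. unfold quot in H. destruct (Req_dec_T b 0) as [->|].
  - destruct (Req_dec_T a 0); simpl in H; [subst; lra | contradiction].
  - apply Rdiv_le_iff; [lra | exact H].
Qed.

Lemma quot_mul_le c b : 0 <= c -> 0 <= b -> Rbar_le (quot (c * b) b) (Fin c).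
Proof.
  intros. unfold quot. destruct (Req_dec_T b 0) as [->|].
  - rewrite Rmult_0_r. destruct (Req_dec_T 0 0); simpl; [lra | congruence].
  - simpl. right. field. auto.
Qed.

Lemma rAB_le m n A B x t : (forall i, (i < m)%nat -> 0 < mulv n B x i) -> 0 <= t ->
  (forall i, (i < m)%nat -> mulv n A x i <= t * mulv n B x i) -> Rbar_le (rAB m n A B x) (Fin t).
Proof.
  intros HB Ht H. apply Rbar_maxn_le; auto. intros i Hi. rewrite quot_fin by auto.
  apply Rdiv_le_iff; auto.
Qed.

Lemma rAB_ge m n A B x c i : (i < m)%nat -> 0 < mulv n B x i ->
  c * mulv n B x i <= mulv n A x i -> Rbar_le (Fin c) (rAB m n A B x).
Proof.
  intros Hi HB H. apply (Rbar_maxn_ge _ _ _ i); auto. rewrite quot_fin by auto.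
  apply Rle_div_iff; auto.
Qed.

Lemma rAB_le_inv m n A B x t :
  (forall i, (i < m)%nat -> 0 <= mulv n A x i /\ 0 <= mulv n B x i) ->
  Rbar_le (rAB m n A B x) (Fin t) -> forall i, (i < m)%nat -> mulv n A x i <= t * mulv n B x i.
Proof.
  intros H1 H2 i Hi. apply quot_le_inv; try apply H1; auto.
  apply (Rbar_maxn_le_inv m (fun i => quot (mulv n A x i) (mulv n B x i)) t i Hi H2).
Qed.

Lemma rhoAB_eq m n A B c :
  (forall x, vpos n x -> Rbar_le (Fin c) (rAB m n A B x)) ->
  (forall e, e > 0 -> exists x, vpos n x /\ Rbar_le (rAB m n A B x) (Fin (c + e))) ->
  rhoAB m n A B = Fin c.
Proof.
  intros Hlb Hap. set (S := fun v => exists x, vpos n x /\ v = rAB m n A B x).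
  assert (Hg : is_glb_Rbar S (Fin c)).
  { split; [intros v [x [Hx ->]]; auto|].
    intros l' Hl'. destruct l' as [a|].
    - simpl. apply Rnot_lt_le. intro Hlt. destruct (Hap ((a - c) / 2)) as [x [Hx Hr]]; [lra|].
      pose proof (Rbar_le_trans _ _ _ (Hl' _ (ex_intro _ x (conj Hx eq_refl))) Hr). simpl in H. lra.
    - destruct (Hap 1) as [x [Hx Hr]]; [lra|].
      exact (Rbar_le_trans _ _ _ (Hl' _ (ex_intro _ x (conj Hx eq_refl))) Hr). }
  unfold rhoAB. fold S.
  assert (He : is_glb_Rbar S (epsilon (inhabits PInf) (is_glb_Rbar S))) by (apply epsilon_spec; eauto).
  destruct He as [He1 He2]. destruct Hg as [Hg1 Hg2].
  apply Rbar_le_antisym; [apply Hg2, He1 | apply He2, Hg1].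
Qed.

(** * Sections of the column owner map of [B] *)

(* The conditions of a WN-pair on [B] alone. *)
Definition col_monomial (m n : nat) (B : mat) : Prop :=
  (forall i j, (i < m)%nat -> (j < n)%nat -> 0 <= B i j) /\
  (forall i, (i < m)%nat -> exists j, (j < n)%nat /\ B i j <> 0) /\
  (forall j, (j < n)%nat -> exactly_one_pos_col m B j).

Definition owner (m : nat) (B : mat) (j : nat) : nat :=
  epsilon (inhabits O) (fun i => (i < m)%nat /\ 0 < B i j).

Definition owner_val (m : nat) (B : mat) (j : nat) : R := B (owner m B j) j.

Definition is_section (m n : nat) (B : mat) (kap : nat -> nat) : Prop :=
  forall i, (i < m)%nat -> (kap i < n)%nat /\ owner m B (kap i) = i.

(* [A_K D^-1] for the columns [K = kap [0, m)] and [D] the diagonal of their positive [B]-entries;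
   it is similar to [B_K^-1 A_K]. *)
Definition section_mat (m : nat) (A B : mat) (kap : nat -> nat) : mat :=
  fun i' i => A i' (kap i) / owner_val m B (kap i).

Definition in_image (m : nat) (B : mat) (kap : nat -> nat) (j : nat) : bool :=
  Nat.eqb (kap (owner m B j)) j.

(* Supported on the image of [kap], with [B (lift z) = z] and [A (lift z) = section_mat z]. *)
Definition lift (m : nat) (B : mat) (kap : nat -> nat) (z : vec) : vec :=
  fun j => if in_image m B kap j then z (owner m B j) / owner_val m B j else 0.

Section Sections.
Variables (m n : nat) (B : mat).
Hypothesis HB : col_monomial m n B.

Lemma owner_spec j : (j < n)%nat ->
  (owner m B j < m)%nat /\ 0 < owner_val m B j /\
  (forall i, (i < m)%nat -> i <> owner m B j -> B i j = 0).
Proof.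
  intros Hj. destruct HB as [Hnn [_ Hcol]]. destruct (Hcol j Hj) as [i0 [Hi0 [Hp Hu]]].
  assert (Hs : (owner m B j < m)%nat /\ 0 < B (owner m B j) j)
    by (unfold owner; apply epsilon_spec; eauto).
  unfold owner_val. split; [tauto | split; [tauto|]].
  intros i Hi Hne. destruct (Hnn i j Hi Hj) as [Hlt|Heq]; auto.
  exfalso. apply Hne. rewrite (Hu i Hi Hlt). symmetry; apply Hu; tauto.
Qed.

Lemma owner_eq i j : (i < m)%nat -> (j < n)%nat -> 0 < B i j -> owner m B j = i.
Proof.
  intros Hi Hj Hp. destruct (owner_spec j Hj) as [_ [_ H0]].
  destruct (Nat.eq_dec i (owner m B j)); auto. rewrite H0 in Hp; auto. lra.
Qed.

Lemma rsum_col (w : nat -> R) j : (j < n)%nat ->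
  rsum m (fun i => w i * B i j) = w (owner m B j) * owner_val m B j.
Proof.
  intros Hj. destruct (owner_spec j Hj) as [H1 [_ H3]].
  rewrite (rsum_single m _ (owner m B j)); auto. intros. rewrite H3; auto; ring.
Qed.

Lemma mulv_B_pos x : vpos n x -> forall i, (i < m)%nat -> 0 < mulv n B x i.
Proof.
  intros Hx i Hi. destruct HB as [Hnn [Hrow _]]. destruct (Hrow i Hi) as [j [Hj Hne]].
  apply (rsum_pos n _ j); auto.
  - intros; apply Rmult_le_pos; auto. apply Rlt_le, Hx; auto.
  - apply Rmult_lt_0_compat; auto. destruct (Hnn i j Hi Hj); auto. congruence.
Qed.

Lemma section_exists : exists kap, is_section m n B kap.
Proof.
  destruct HB as [Hnn [Hrow _]].
  exists (fun i => epsilon (inhabits O) (fun j => (j < n)%nat /\ B i j <> 0)).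
  intros i Hi.
  destruct (epsilon_spec (inhabits O) (fun j => (j < n)%nat /\ B i j <> 0) (Hrow i Hi)) as [H1 H2].
  split; auto. apply owner_eq; auto. destruct (Hnn i _ Hi H1); auto. congruence.
Qed.

Section OneSection.
Variable kap : nat -> nat.
Hypothesis Hkap : is_section m n B kap.

Lemma section_inj i i' : (i < m)%nat -> (i' < m)%nat -> kap i = kap i' -> i = i'.
Proof. intros Hi Hi' He. destruct (Hkap i Hi), (Hkap i' Hi'). congruence. Qed.

Lemma in_image_iff j : (j < n)%nat ->
  in_image m B kap j = true <-> exists i, (i < m)%nat /\ kap i = j.
Proof.
  intros Hj. unfold in_image. rewrite Nat.eqb_eq. split.
  - intros. exists (owner m B j). split; auto. apply owner_spec; auto.
  - intros [i [Hi <-]]. destruct (Hkap i Hi). congruence.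
Qed.

Lemma in_image_section i : (i < m)%nat -> in_image m B kap (kap i) = true.
Proof. intros Hi. apply in_image_iff; [apply Hkap | exists i]; auto. Qed.

Lemma lift_section z i : (i < m)%nat -> lift m B kap z (kap i) = z i / owner_val m B (kap i).
Proof.
  intros Hi. unfold lift. rewrite in_image_section by auto. destruct (Hkap i Hi) as [_ ->]. auto.
Qed.

Lemma rsum_image (g : nat -> R) :
  (forall j, (j < n)%nat -> in_image m B kap j = false -> g j = 0) ->
  rsum n g = rsum m (fun i => g (kap i)).
Proof.
  intros Hg. apply rsum_reindex; [apply Hkap | apply section_inj|].
  intros j Hj Hn. apply Hg; auto. destruct (in_image m B kap j) eqn:E; auto.
  apply in_image_iff in E; auto. destruct E as [i [Hi He]]. exfalso; eapply Hn; eauto.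
Qed.

Lemma mulv_B_image z : (forall j, (j < n)%nat -> in_image m B kap j = false -> z j = 0) ->
  forall i, (i < m)%nat -> mulv n B z i = owner_val m B (kap i) * z (kap i).
Proof.
  intros Hz i Hi. unfold mulv. rewrite rsum_image.
  - rewrite (rsum_single m _ i); auto.
    + destruct (Hkap i Hi) as [_ E]. unfold owner_val. rewrite E. auto.
    + intros i' Hi' Hne. destruct (Hkap i' Hi') as [Hk E].
      destruct (owner_spec _ Hk) as [_ [_ H0]]. rewrite H0; [ring | auto | congruence].
  - intros j Hj Hf. rewrite Hz; auto. ring.
Qed.

Lemma lift_image z j : in_image m B kap j = false -> lift m B kap z j = 0.
Proof. intros Hf. unfold lift. rewrite Hf. auto. Qed.

Lemma mulv_B_lift z i : (i < m)%nat -> mulv n B (lift m B kap z) i = z i.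
Proof.
  intros Hi. rewrite mulv_B_image, lift_section by (auto; intros; apply lift_image; auto).
  destruct (Hkap i Hi) as [Hk _]. destruct (owner_spec _ Hk) as [_ [Hb _]]. field. lra.
Qed.

Lemma mulv_lift A z i : mulv n A (lift m B kap z) i = mulv m (section_mat m A B kap) z i.
Proof.
  unfold mulv. rewrite rsum_image.
  - apply rsum_ext. intros i' Hi'. rewrite lift_section by auto. unfold section_mat, Rdiv. ring.
  - intros j Hj Hf. rewrite lift_image; auto. ring.
Qed.

Lemma lift_nonneg z : vnonneg m z -> vnonneg n (lift m B kap z).
Proof.
  intros Hz j Hj. unfold lift. destruct (in_image m B kap j); [|lra].
  destruct (owner_spec j Hj) as [H1 [H2 _]]. apply Rmult_le_pos; [apply Hz; auto|].
  apply Rlt_le, Rinv_0_lt_compat; auto.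
Qed.

Lemma section_mat_nonneg A : (forall i j, (i < m)%nat -> (j < n)%nat -> 0 <= A i j) ->
  mnonneg m (section_mat m A B kap).
Proof.
  intros HA i l Hi Hl. destruct (Hkap l Hl) as [Hk _].
  destruct (owner_spec _ Hk) as [_ [Hb _]]. apply Rmult_le_pos; auto.
  apply Rlt_le, Rinv_0_lt_compat; auto.
Qed.

Lemma section_mat_pos A : (forall i j, (i < m)%nat -> (j < n)%nat -> 0 < A i j) ->
  mpos m (section_mat m A B kap).
Proof.
  intros HA i l Hi Hl. destruct (Hkap l Hl) as [Hk _].
  destruct (owner_spec _ Hk) as [_ [Hb _]]. apply Rdiv_lt_0_compat; auto.
Qed.

Lemma mulv_plus_const F x d i : mulv n F (fun j => x j + d) i = mulv n F x i + d * rsum n (F i).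
Proof. unfold mulv. rewrite <- rsum_scal_l, <- rsum_plus. apply rsum_ext. intros; ring. Qed.

(* A sub-eigenvector [z > 0] of the section matrix lifts to a nonnegative vector; adding a
   small constant [d] makes it positive at the cost of an arbitrarily small [e] in the quotient. *)
Lemma lift_perturb A z t e : (forall i j, (i < m)%nat -> (j < n)%nat -> 0 <= A i j) ->
  vpos m z -> 0 <= t -> (forall i, (i < m)%nat -> mulv m (section_mat m A B kap) z i <= t * z i) ->
  e > 0 ->
  exists x, vpos n x /\ (forall i, (i < m)%nat -> mulv n A x i <= (t + e) * mulv n B x i) /\
    (forall j, (j < n)%nat -> Rabs (x j - lift m B kap z j) <= e).
Proof.
  intros HA Hz Ht Hsub He.
  set (S := rsum m (fun i => rsum n (A i) / z i)).
  assert (Hrow : forall i, (i < m)%nat -> 0 <= rsum n (A i) / z i).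
  { intros i Hi. apply Rmult_le_pos; [apply rsum_nonneg; intros; apply HA; auto|].
    apply Rlt_le, Rinv_0_lt_compat, Hz; auto. }
  assert (HS : forall i, (i < m)%nat -> rsum n (A i) <= S * z i).
  { intros i Hi. apply Rdiv_le_iff; [apply Hz; auto|]. apply (rsum_ge_term m (fun i => rsum n (A i) / z i)); auto. }
  assert (HS0 : 0 <= S) by (apply rsum_nonneg; auto).
  set (d := e / (1 + S)).
  assert (Hd : 0 < d) by (apply Rdiv_lt_0_compat; lra).
  assert (HdS : d * S <= e /\ d <= e).
  { unfold d. split.
    - replace (e / (1 + S) * S) with (e * S / (1 + S)) by (field; lra).
      apply Rdiv_le_iff; nra.
    - apply Rdiv_le_iff; nra. }
  pose proof (lift_nonneg z (fun j Hj => Rlt_le _ _ (Hz j Hj))) as Hlift.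
  exists (fun j => lift m B kap z j + d). split; [|split].
  - intros j Hj. specialize (Hlift j Hj). lra.
  - intros i Hi. rewrite !mulv_plus_const, mulv_lift, mulv_B_lift by auto.
    assert (0 <= rsum n (B i)) by (apply rsum_nonneg; intros; apply (proj1 HB); auto).
    specialize (Hsub i Hi). specialize (HS i Hi). specialize (Hz i Hi).
    assert (d * rsum n (A i) <= e * z i).
    { apply Rle_trans with (d * (S * z i)); [apply Rmult_le_compat_l; lra|].
      rewrite <- Rmult_assoc. apply Rmult_le_compat_r; lra. }
    assert (0 <= (t + e) * (d * rsum n (B i))) by (apply Rmult_le_pos; [lra | apply Rmult_le_pos; lra]).
    nra.
  - intros j Hj. replace (lift m B kap z j + d - lift m B kap z j) with d by ring.
    rewrite Rabs_right; lra.
Qed.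

End OneSection.
End Sections.

Section RhoSections.
Variables (m n : nat) (A B : mat).
Hypotheses (Hm : (1 <= m)%nat) (HB : col_monomial m n B)
  (HA : forall i j, (i < m)%nat -> (j < n)%nat -> 0 <= A i j).

Lemma rAB_approx_section kap e : is_section m n B kap -> e > 0 ->
  exists x, vpos n x /\ Rbar_le (rAB m n A B x) (Fin (cw m (section_mat m A B kap) + e)).
Proof.
  intros Hkap He. set (M := section_mat m A B kap).
  assert (HM : mnonneg m M) by (apply section_mat_nonneg with n; auto).
  destruct (cw_approx m M Hm HM (e/2)) as [t [[z [Hz Hsub]] Ht]]; [lra|].
  assert (Ht0 : 0 <= t) by (apply (cw_bound_ge0 m M t Hm HM); exists z; auto).
  destruct (lift_perturb m n B HB kap Hkap A z t (e/2)) as [x [Hx [Hxle _]]]; auto; [lra|].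
  exists x. split; auto. apply Rbar_le_trans with (Fin (t + e/2)).
  - apply rAB_le; [apply mulv_B_pos; auto | lra | exact Hxle].
  - simpl. fold M. lra.
Qed.

Definition lower_bound_rAB (c : R) : Prop :=
  forall x, vpos n x -> exists i, (i < m)%nat /\ c * mulv n B x i <= mulv n A x i.

Lemma cw_section_ge kap c : is_section m n B kap -> lower_bound_rAB c ->
  c <= cw m (section_mat m A B kap).
Proof.
  intros Hkap Hlow. apply Rnot_lt_le. intro Hlt.
  destruct (rAB_approx_section kap ((c - cw m (section_mat m A B kap)) / 2)) as [x [Hx Hr]];
    [auto | lra|].
  destruct (Hlow x Hx) as [i [Hi Hc]].
  pose proof (Rbar_le_trans _ _ _ (rAB_ge m n A B x c i Hi (mulv_B_pos m n B HB x Hx i Hi) Hc) Hr).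
  simpl in H. lra.
Qed.

Lemma rhoAB_eq_cw_section kap : is_section m n B kap ->
  lower_bound_rAB (cw m (section_mat m A B kap)) ->
  rhoAB m n A B = Fin (cw m (section_mat m A B kap)).
Proof.
  intros Hkap Hlow. apply rhoAB_eq.
  - intros x Hx. destruct (Hlow x Hx) as [i [Hi Hc]].
    apply (rAB_ge m n A B x _ i); auto. apply (mulv_B_pos m n B); auto.
  - intros e He. apply rAB_approx_section; auto.
Qed.

End RhoSections.

(** * A section minimizing the Collatz–Wielandt number *)

Fixpoint choices (c : nat -> list nat) (i0 k : nat) : list (list nat) :=
  match k with
  | O => nil :: nil
  | S k' => flat_map (fun j => map (cons j) (choices c (S i0) k')) (c i0)
  end.

Lemma choices_sound c k : forall i0 l, In l (choices c i0 k) ->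
  length l = k /\ forall i, (i < k)%nat -> In (nth i l O) (c (i0 + i)%nat).
Proof.
  induction k; simpl; intros i0 l H.
  - destruct H as [<-|[]]. split; auto. intros; lia.
  - apply in_flat_map in H. destruct H as [j [Hj Hl]].
    apply in_map_iff in Hl. destruct Hl as [l' [<- Hl']].
    destruct (IHk _ _ Hl') as [H1 H2]. simpl. split; auto. intros [|i] Hi; simpl.
    + rewrite Nat.add_0_r; auto.
    + replace (i0 + S i)%nat with (S i0 + i)%nat by lia. apply H2; lia.
Qed.

Lemma choices_complete c k : forall i0 l, length l = k ->
  (forall i, (i < k)%nat -> In (nth i l O) (c (i0 + i)%nat)) -> In l (choices c i0 k).
Proof.
  induction k; simpl; intros i0 l Hl H.
  - destruct l; simpl in *; [auto | lia].
  - destruct l as [|j l]; simpl in Hl; [lia|]. apply in_flat_map. exists j. split.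
    + specialize (H O ltac:(lia)). rewrite Nat.add_0_r in H. auto.
    + apply in_map. apply IHk; [lia|]. intros i Hi. specialize (H (S i) ltac:(lia)).
      replace (i0 + S i)%nat with (S i0 + i)%nat in H by lia. auto.
Qed.

Definition owned_cols (m n : nat) (B : mat) (i : nat) : list nat :=
  filter (fun j => Nat.eqb (owner m B j) i) (seq 0 n).

Lemma owned_cols_spec m n B i j : In j (owned_cols m n B i) <-> (j < n)%nat /\ owner m B j = i.
Proof. unfold owned_cols. rewrite filter_In, in_seq, Nat.eqb_eq. split; intros; lia. Qed.

Definition nth_fn (l : list nat) : nat -> nat := fun i => nth i l O.

(* Sections as lists, restricted to [0 .. m-1]. *)
Definition sections (m n : nat) (B : mat) : list (list nat) := choices (owned_cols m n B) 0 m.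

Lemma sections_sound m n B l : In l (sections m n B) -> is_section m n B (nth_fn l).
Proof.
  intros H i Hi. destruct (choices_sound _ _ _ _ H) as [_ H2].
  apply owned_cols_spec. apply (H2 i Hi).
Qed.

Lemma sections_complete m n B kap : is_section m n B kap ->
  exists l, In l (sections m n B) /\ forall i, (i < m)%nat -> nth_fn l i = kap i.
Proof.
  intros Hkap. exists (map kap (seq 0 m)).
  assert (Hn : forall i, (i < m)%nat -> nth_fn (map kap (seq 0 m)) i = kap i).
  { intros. unfold nth_fn.
    rewrite nth_indep with (d' := kap O) by (rewrite length_map, length_seq; auto).
    rewrite map_nth, seq_nth; auto. }
  split; auto. apply choices_complete; [rewrite length_map, length_seq; auto|].
  intros i Hi. fold (nth_fn (map kap (seq 0 m)) i). rewrite Hn by auto.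
  apply owned_cols_spec, Hkap; auto.
Qed.

Lemma section_update m n B kap j : col_monomial m n B -> is_section m n B kap -> (j < n)%nat ->
  is_section m n B (fun i => if Nat.eqb i (owner m B j) then j else kap i).
Proof.
  intros HB Hkap Hj i Hi. destruct (Nat.eqb_spec i (owner m B j)) as [->|]; [|apply Hkap; auto].
  auto.
Qed.

(* With [w^T M = c w^T] for the section minimizing [c = cw M], the row vector [w^T A] dominates
   [c w^T B] column by column: otherwise swapping column [j] into the section would lower [c]. *)
Lemma min_section_left_ineq m n A B kap w : (1 <= m)%nat -> col_monomial m n B ->
  (forall i j, (i < m)%nat -> (j < n)%nat -> 0 < A i j) ->
  is_section m n B kap -> vpos m w ->
  (forall l, (l < m)%nat ->
     mulv m (tr (section_mat m A B kap)) w l = cw m (section_mat m A B kap) * w l) ->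
  (forall kap', is_section m n B kap' ->
     cw m (section_mat m A B kap) <= cw m (section_mat m A B kap')) ->
  forall j, (j < n)%nat ->
    cw m (section_mat m A B kap) * (w (owner m B j) * owner_val m B j) <= rsum m (fun i => w i * A i j).
Proof.
  intros Hm HB HA Hkap Hw Hweig Hmin j Hj. set (c := cw m (section_mat m A B kap)) in *.
  apply Rnot_lt_le. intro Hlt.
  destruct (owner_spec m n B HB j Hj) as [Hi0 [Hb0 _]]. set (i0 := owner m B j) in *.
  set (kap' := fun i => if Nat.eqb i i0 then j else kap i).
  assert (Hkap' : is_section m n B kap') by (apply section_update; auto).
  set (M' := section_mat m A B kap').
  destruct (perron_pos m M' Hm (section_mat_pos m n B HB kap' Hkap' A HA)) as [v' [[Hv' _] Hv'eig]].
  assert (Hcol : forall l, (l < m)%nat -> l <> i0 -> mulv m (tr M') w l = c * w l).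
  { intros l Hl Hne. rewrite <- Hweig by auto. apply mulv_ext; auto. intros i _.
    unfold tr, M', section_mat, kap'. destruct (Nat.eqb_spec l i0); [congruence | auto]. }
  assert (Hcol0 : mulv m (tr M') w i0 < c * w i0).
  { unfold mulv, tr, M', section_mat, kap'. rewrite Nat.eqb_refl.
    rewrite (rsum_ext m _ (fun i => (w i * A i j) * / owner_val m B j)) by (intros; unfold Rdiv; ring).
    rewrite rsum_scal_r. apply Rdiv_lt_iff; auto. lra. }
  assert (cw m M' < c).
  { apply (eigval_le_left m M' v' w); auto.
    - intros l Hl. destruct (Nat.eq_dec l i0) as [->|]; [lra | rewrite Hcol; auto; lra].
    - eauto. }
  specialize (Hmin kap' Hkap'). fold M' c in Hmin. lra.
Qed.

Lemma lower_bound_of_left_ineq m n A B c w : (1 <= m)%nat -> col_monomial m n B -> vpos m w ->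
  (forall j, (j < n)%nat -> c * (w (owner m B j) * owner_val m B j) <= rsum m (fun i => w i * A i j)) ->
  lower_bound_rAB m n A B c.
Proof.
  intros Hm HB Hw Hcol x Hx. apply NNPP. intro Hn.
  assert (Hlt : forall i, (i < m)%nat -> mulv n A x i < c * mulv n B x i).
  { intros i Hi. apply Rnot_le_lt. intro. apply Hn. eauto. }
  assert (Hswap : forall F : mat, rsum m (fun i => w i * mulv n F x i) =
                                  rsum n (fun j => x j * rsum m (fun i => w i * F i j))).
  { intros F. unfold mulv. transitivity (rsum m (fun i => rsum n (fun j => w i * F i j * x j))).
    - apply rsum_ext; intros. rewrite <- rsum_scal_l. apply rsum_ext; intros; ring.
    - rewrite rsum_swap. apply rsum_ext; intros. rewrite <- rsum_scal_l. apply rsum_ext; intros; ring. }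
  assert (rsum m (fun i => w i * mulv n A x i) < rsum m (fun i => c * (w i * mulv n B x i))).
  { apply (rsum_lt m _ _ O); [lia | intros i Hi |].
    - specialize (Hw i Hi). specialize (Hlt i Hi). nra.
    - specialize (Hw O ltac:(lia)). specialize (Hlt O ltac:(lia)). nra. }
  assert (rsum m (fun i => c * (w i * mulv n B x i)) <= rsum m (fun i => w i * mulv n A x i)); [|lra].
  rewrite rsum_scal_l, !Hswap, <- rsum_scal_l. apply rsum_le. intros j Hj.
  rewrite (rsum_col m n B HB) by auto. specialize (Hcol j Hj). specialize (Hx j Hj). nra.
Qed.

Lemma minimax_section_pos m n A B : (1 <= m)%nat -> col_monomial m n B ->
  (forall i j, (i < m)%nat -> (j < n)%nat -> 0 < A i j) ->
  exists l, In l (sections m n B) /\ lower_bound_rAB m n A B (cw m (section_mat m A B (nth_fn l))).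
Proof.
  intros Hm HB HA.
  destruct (list_argmin (sections m n B) (fun l => cw m (section_mat m A B (nth_fn l)))) as [l [Hl Hmin]].
  { destruct (section_exists m n B HB) as [kap Hkap].
    destruct (sections_complete m n B kap Hkap) as [l [Hl _]]. destruct (sections m n B); easy. }
  exists l. split; auto.
  assert (Hkap : is_section m n B (nth_fn l)) by (apply sections_sound; auto).
  set (M := section_mat m A B (nth_fn l)).
  destruct (perron_pos_tr m M Hm (section_mat_pos m n B HB _ Hkap A HA)) as [w [Hw Hweig]].
  apply (lower_bound_of_left_ineq m n A B _ w); auto.
  apply (min_section_left_ineq m n A B (nth_fn l) w); auto.
  intros kap' Hkap'. destruct (sections_complete m n B kap' Hkap') as [l' [Hl' Heq]].
  rewrite (cw_ext m (section_mat m A B kap') (section_mat m A B (nth_fn l'))); [apply Hmin; auto|].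
  intros i i' Hi Hi'. unfold section_mat. rewrite Heq; auto.
Qed.

(* Each positive [A + 1/(N+1)] has a minimizing section; one section [l] recurs infinitely often,
   and the lower bounds for the perturbed pairs pass to the limit. *)
Lemma minimax_section m n A B : (1 <= m)%nat -> col_monomial m n B ->
  (forall i j, (i < m)%nat -> (j < n)%nat -> 0 <= A i j) ->
  exists l, In l (sections m n B) /\ lower_bound_rAB m n A B (cw m (section_mat m A B (nth_fn l))).
Proof.
  intros Hm HB HA. set (AN := fun N => shift A (/ INR (S N))).
  assert (HAN : forall N i j, (i < m)%nat -> (j < n)%nat -> A i j < AN N i j).
  { intros N i j _ _. unfold AN, shift. pose proof (inv_succ_pos N). lra. }
  destruct (choice (fun N l => In l (sections m n B) /\
              lower_bound_rAB m n (AN N) B (cw m (section_mat m (AN N) B (nth_fn l))))) as [lN HlN].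
  { intros N. apply minimax_section_pos; auto.
    intros i j Hi Hj. specialize (HA i j Hi Hj). specialize (HAN N i j Hi Hj). lra. }
  destruct (infinitely_often_in_list (sections m n B) lN) as [l [Hl Hinf]]; [apply HlN|].
  exists l. split; auto. intros x Hx.
  set (c := cw m (section_mat m A B (nth_fn l))).
  assert (Hkap : is_section m n B (nth_fn l)) by (apply sections_sound; auto).
  apply NNPP. intro Hn.
  destruct (finite_strict_bound m (fun i => mulv n A x i - c * mulv n B x i) 0) as [g [Hg Hgap]].
  { intros i Hi. apply Rlt_minus, Rnot_le_lt. intro. apply Hn. eauto. }
  assert (Hsx : 0 <= rsum n x) by (apply rsum_nonneg; intros; apply Rlt_le, Hx; auto).
  destruct (inv_succ_small (- g / (rsum n x + 1))) as [N0 HN0]; [apply Rdiv_lt_0_compat; lra|].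
  destruct (Hinf N0) as [N [HN HlNl]].
  destruct (proj2 (HlN N) x Hx) as [i [Hi Hc]]. rewrite HlNl in Hc.
  assert (Hmono : c <= cw m (section_mat m (AN N) B (nth_fn l))).
  { apply cw_mono; [auto | apply section_mat_nonneg with n; auto|].
    intros i' l' Hi' Hl'. unfold section_mat. destruct (Hkap l' Hl') as [Hk _].
    destruct (owner_spec m n B HB _ Hk) as [_ [Hb _]].
    apply Rmult_le_compat_r; [apply Rlt_le, Rinv_0_lt_compat; auto | apply Rlt_le, HAN; auto]. }
  change (mulv n (AN N) x i) with (mulv n (shift A (/ INR (S N))) x i) in Hc.
  rewrite mulv_shift in Hc.
  assert (HxN : / INR (S N) * rsum n x < - g).
  { specialize (HN0 N HN). apply (Rmult_lt_compat_r (rsum n x + 1)) in HN0; [|lra].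
    replace (- g / (rsum n x + 1) * (rsum n x + 1)) with (- g) in HN0 by (field; lra).
    pose proof (inv_succ_pos N). nra. }
  specialize (Hgap i Hi). pose proof (mulv_B_pos m n B HB x Hx i Hi).
  assert (c * mulv n B x i <= cw m (section_mat m (AN N) B (nth_fn l)) * mulv n B x i)
    by (apply Rmult_le_compat_r; lra).
  lra.
Qed.

(** * Column sets [K] in [M(B)] and sections *)

Lemma inverse_unique m M N N' : is_inverse m M N -> is_inverse m M N' ->
  forall l i, (l < m)%nat -> (i < m)%nat -> N' l i = N l i.
Proof.
  intros HN HN' l i Hl Hi.
  assert (Hid : forall (F : nat -> R) a, (a < m)%nat ->
                  rsum m (fun b => F b * idm b a) = F a /\ rsum m (fun b => idm a b * F b) = F a).
  { intros F a Ha. unfold idm. split; rewrite (rsum_single m _ a); auto;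
      try (rewrite Nat.eqb_refl; ring);
      intros b Hb Hne; [destruct (Nat.eqb_spec b a) | destruct (Nat.eqb_spec a b)]; try lia; ring. }
  transitivity (rsum m (fun a => N' l a * rsum m (fun b => M a b * N b i))).
  - rewrite <- (proj1 (Hid (N' l) i Hi)). apply rsum_ext. intros a Ha.
    destruct (HN a i Ha Hi) as [H1 _]. rewrite <- H1. auto.
  - transitivity (rsum m (fun b => rsum m (fun a => N' l a * M a b) * N b i)).
    + transitivity (rsum m (fun a => rsum m (fun b => N' l a * M a b * N b i))).
      * apply rsum_ext; intros. rewrite <- rsum_scal_l. apply rsum_ext; intros; ring.
      * rewrite rsum_swap. apply rsum_ext; intros. rewrite <- rsum_scal_r. auto.
    + rewrite <- (proj2 (Hid (fun b => N b i) l Hl)). apply rsum_ext. intros b Hb.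
      destruct (HN' l b Hl Hb) as [_ H2]. rewrite <- H2. auto.
Qed.

(* [row_of K l] is the row of the positive entry of the [l]-th column of [K]; for [K] in [M(B)]
   it is a permutation of [0 .. m-1] with inverse [pos_of K]. *)
Definition row_of (m : nat) (B : mat) (K : list nat) (l : nat) : nat := owner m B (nth_fn K l).

Definition pos_of (m : nat) (B : mat) (K : list nat) (i : nat) : nat :=
  epsilon (inhabits O) (fun l => (l < m)%nat /\ row_of m B K l = i).

Definition section_of (m : nat) (B : mat) (K : list nat) : nat -> nat :=
  fun i => nth_fn K (pos_of m B K i).

(* [B_K^-1], a weighted permutation matrix *)
Definition colsub_inv (m : nat) (B : mat) (K : list nat) : mat :=
  fun l i => if Nat.eqb i (row_of m B K l) then / owner_val m B (nth_fn K l) else 0.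

(* The diagonal similarity carrying sub-eigenvectors of [section_mat] to those of [CK]. *)
Definition to_K (m : nat) (B : mat) (K : list nat) (z : vec) : vec :=
  fun l => z (row_of m B K l) / owner_val m B (nth_fn K l).

Section ColumnSets.
Variables (m n : nat) (B : mat) (K : list nat).
Hypotheses (HB : col_monomial m n B) (HK : in_MB m n B K).

Lemma nth_fn_K_lt l : (l < m)%nat -> (nth_fn K l < n)%nat.
Proof. destruct HK as [[_ H1] [H2 _]]. intros Hl. apply H1, nth_In. lia. Qed.

Lemma row_of_spec l : (l < m)%nat ->
  (row_of m B K l < m)%nat /\ 0 < B (row_of m B K l) (nth_fn K l) /\
  owner_val m B (nth_fn K l) = B (row_of m B K l) (nth_fn K l).
Proof.
  intros Hl. destruct (owner_spec m n B HB _ (nth_fn_K_lt l Hl)) as [H1 [H2 _]]. unfold row_of. auto.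
Qed.

Lemma row_of_inj l l' : (l < m)%nat -> (l' < m)%nat -> row_of m B K l = row_of m B K l' -> l = l'.
Proof.
  intros Hl Hl' He.
  destruct (row_of_spec l Hl) as [H1 [H2 _]]. destruct (row_of_spec l' Hl') as [_ [H2' _]].
  destruct HK as [_ [_ [_ [Hrow _]]]]. destruct (Hrow _ H1) as [j [_ [_ Hu]]].
  unfold colsub in Hu. rewrite (Hu l Hl H2). rewrite He in *. symmetry; apply Hu; auto.
Qed.

Lemma row_of_surj i : (i < m)%nat -> exists l, (l < m)%nat /\ row_of m B K l = i.
Proof.
  intros Hi. destruct HK as [_ [_ [_ [Hrow _]]]]. destruct (Hrow i Hi) as [l [Hl [Hp _]]].
  exists l. split; auto. apply owner_eq with n; auto. apply nth_fn_K_lt; auto.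
Qed.

Lemma rsum_row_of (g : nat -> R) : rsum m g = rsum m (fun l => g (row_of m B K l)).
Proof.
  apply rsum_reindex; [apply row_of_spec | apply row_of_inj|].
  intros i Hi Hn. destruct (row_of_surj i Hi) as [l [Hl E]]. exfalso. eapply Hn; eauto.
Qed.

Lemma pos_of_spec i : (i < m)%nat -> (pos_of m B K i < m)%nat /\ row_of m B K (pos_of m B K i) = i.
Proof. intros Hi. unfold pos_of. apply epsilon_spec, row_of_surj; auto. Qed.

Lemma pos_of_row_of l : (l < m)%nat -> pos_of m B K (row_of m B K l) = l.
Proof.
  intros Hl. destruct (row_of_spec l Hl) as [H1 _].
  destruct (pos_of_spec _ H1) as [H2 H3]. apply row_of_inj; auto.
Qed.

Lemma section_of_row_of l : (l < m)%nat -> section_of m B K (row_of m B K l) = nth_fn K l.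
Proof. intros Hl. unfold section_of. rewrite pos_of_row_of; auto. Qed.

Lemma section_of_is_section : is_section m n B (section_of m B K).
Proof.
  intros i Hi. destruct (pos_of_spec i Hi) as [H1 H2].
  split; [apply nth_fn_K_lt | apply H2]; auto.
Qed.

Lemma In_K_iff j : (j < n)%nat -> In j K <-> in_image m B (section_of m B K) j = true.
Proof.
  intros Hj. rewrite (in_image_iff m n B HB _ section_of_is_section) by auto.
  destruct HK as [_ [Hlen _]]. split.
  - intros Hin. destruct (In_nth K j O Hin) as [l [Hl He]]. rewrite Hlen in Hl.
    exists (row_of m B K l). split; [apply row_of_spec; auto|].
    rewrite section_of_row_of; auto.
  - intros [i [Hi <-]]. apply nth_In. rewrite Hlen. apply pos_of_spec; auto.
Qed.

Lemma colsub_inv_is_inverse : is_inverse m (colsub B K) (colsub_inv m B K).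
Proof.
  intros i j Hi Hj. unfold mulm, colsub, colsub_inv, idm. split.
  - destruct (pos_of_spec i Hi) as [Hl Hpl].
    rewrite (rsum_single m _ (pos_of m B K i)); auto.
    + fold (nth_fn K (pos_of m B K i)). rewrite Hpl.
      destruct (row_of_spec _ Hl) as [_ [Hp Hb]]. rewrite Hb, Hpl in *.
      destruct (Nat.eqb_spec j i); destruct (Nat.eqb_spec i j); try lia; [field; lra | ring].
    + intros l Hl' Hne. fold (nth_fn K l).
      destruct (owner_spec m n B HB _ (nth_fn_K_lt l Hl')) as [_ [_ H3]].
      rewrite H3; auto; [ring|]. intro He. apply Hne. fold (row_of m B K l) in He.
      rewrite He, pos_of_row_of; auto.
  - destruct (row_of_spec i Hi) as [Hp1 [Hp2 Hb]].
    rewrite (rsum_single m _ (row_of m B K i)); auto.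
    + rewrite Nat.eqb_refl. fold (nth_fn K j). destruct (Nat.eqb_spec i j) as [<-|Hne].
      * rewrite Hb. field. lra.
      * destruct (owner_spec m n B HB _ (nth_fn_K_lt j Hj)) as [_ [_ H3]].
        rewrite H3; auto; [ring|]. intro He. apply Hne, row_of_inj; auto.
    + intros a Ha Hne. destruct (Nat.eqb_spec a (row_of m B K i)); [congruence | ring].
Qed.

Lemma CK_entry A l l' : (l < m)%nat -> (l' < m)%nat ->
  CK m A B K l l' = A (row_of m B K l) (nth_fn K l') / owner_val m B (nth_fn K l).
Proof.
  intros Hl Hl'. unfold CK, mulm.
  assert (Hinv : is_inverse m (colsub B K) (invm m (colsub B K)))
    by (unfold invm; apply epsilon_spec; exists (colsub_inv m B K); apply colsub_inv_is_inverse).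
  rewrite (rsum_ext m _ (fun i => colsub_inv m B K l i * colsub A K i l'))
    by (intros; rewrite (inverse_unique m _ _ _ colsub_inv_is_inverse Hinv); auto).
  destruct (row_of_spec l Hl) as [Hp1 _].
  rewrite (rsum_single m _ (row_of m B K l)); auto.
  - unfold colsub_inv, colsub. rewrite Nat.eqb_refl. unfold nth_fn, Rdiv. ring.
  - intros a Ha Hne. unfold colsub_inv. destruct (Nat.eqb_spec a (row_of m B K l)); [congruence | ring].
Qed.

Lemma CK_to_K A z l : (l < m)%nat ->
  mulv m (CK m A B K) (to_K m B K z) l =
  mulv m (section_mat m A B (section_of m B K)) z (row_of m B K l) / owner_val m B (nth_fn K l).
Proof.
  intros Hl. unfold mulv at 2.
  rewrite rsum_row_of.
  unfold Rdiv. rewrite <- rsum_scal_r. apply rsum_ext. intros l' Hl'.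
  rewrite CK_entry by auto. unfold section_mat, to_K. rewrite section_of_row_of by auto.
  unfold Rdiv. ring.
Qed.

Lemma CK_to_K_le A z t : (forall i, (i < m)%nat ->
    mulv m (section_mat m A B (section_of m B K)) z i <= t * z i) ->
  forall l, (l < m)%nat -> mulv m (CK m A B K) (to_K m B K z) l <= t * to_K m B K z l.
Proof.
  intros Hsub l Hl. rewrite CK_to_K by auto. unfold to_K.
  destruct (row_of_spec l Hl) as [H1 [H2 ->]]. apply Rdiv_le_iff; auto.
  replace (t * (z (row_of m B K l) / B (row_of m B K l) (nth_fn K l)) * B (row_of m B K l) (nth_fn K l))
    with (t * z (row_of m B K l)) by (field; lra). apply Hsub; auto.
Qed.

Lemma to_K_pos z : vpos m z -> vpos m (to_K m B K z).
Proof.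
  intros Hz l Hl. unfold to_K. destruct (row_of_spec l Hl) as [H1 [H2 ->]]. apply Rdiv_lt_0_compat; auto.
Qed.

Lemma to_K_nonneg z : vnonneg m z -> vnonneg m (to_K m B K z).
Proof.
  intros Hz l Hl. unfold to_K. destruct (row_of_spec l Hl) as [H1 [H2 ->]].
  apply Rmult_le_pos; auto. apply Rlt_le, Rinv_0_lt_compat; auto.
Qed.

Lemma to_K_zero z i : (i < m)%nat -> to_K m B K z (pos_of m B K i) = 0 -> z i = 0.
Proof.
  intros Hi H0. destruct (pos_of_spec i Hi) as [H1 H2]. unfold to_K in H0. rewrite H2 in H0.
  destruct (row_of_spec _ H1) as [_ [Hp Hb]]. rewrite Hb in H0.
  apply (Rmult_eq_reg_r (/ B (row_of m B K (pos_of m B K i)) (nth_fn K (pos_of m B K i)))).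
  - rewrite Rmult_0_l. exact H0.
  - apply Rinv_neq_0_compat. lra.
Qed.

Lemma CK_nonneg A : (forall i j, (i < m)%nat -> (j < n)%nat -> 0 <= A i j) -> mnonneg m (CK m A B K).
Proof.
  intros HA l l' Hl Hl'. rewrite CK_entry by auto. destruct (row_of_spec l Hl) as [H1 [H2 ->]].
  apply Rmult_le_pos; [apply HA; auto; apply nth_fn_K_lt; auto | apply Rlt_le, Rinv_0_lt_compat; auto].
Qed.

Lemma spectral_radius_CK A : (1 <= m)%nat -> (forall i j, (i < m)%nat -> (j < n)%nat -> 0 <= A i j) ->
  spectral_radius m (CK m A B K) = cw m (section_mat m A B (section_of m B K)).
Proof.
  intros Hm HA. set (M := section_mat m A B (section_of m B K)).
  assert (HM : mnonneg m M) by (apply section_mat_nonneg with n; auto; apply section_of_is_section).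
  apply spectral_radius_eq; [auto | apply CK_nonneg; auto | apply cw_ge0; auto | |].
  - destruct (perron_nonneg m M Hm HM) as [z [_ [_ [Hz1 [Hz2 [Hz3 _]]]]]].
    exists (to_K m B K z). split; [apply to_K_nonneg; auto|]. split.
    + destruct (pos_entry_of_sum1 m z Hz1 Hz2) as [i [Hi Hzi]].
      exists (pos_of m B K i). split; [apply pos_of_spec; auto|].
      intro H0. apply to_K_zero in H0; auto. lra.
    + intros l Hl. rewrite CK_to_K by auto. fold M. rewrite Hz3 by (apply row_of_spec; auto).
      unfold to_K, Rdiv. ring.
  - intros t Ht. destruct (cw_approx m M Hm HM (t - cw m M)) as [t' [[z [Hz1 Hz2]] Ht']]; [lra|].
    exists (to_K m B K z). split; [apply to_K_pos; auto|].
    apply CK_to_K_le. intros i Hi. eapply Rle_trans; [apply Hz2; auto|].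
    apply Rmult_le_compat_r; [apply Rlt_le, Hz1; auto | lra].
Qed.

End ColumnSets.

Lemma StronglySorted_seq a k : StronglySorted lt (seq a k).
Proof.
  revert a; induction k; simpl; intros; constructor; auto.
  apply Forall_forall. intros x Hx. apply in_seq in Hx. lia.
Qed.

Lemma StronglySorted_filter (f : nat -> bool) l : StronglySorted lt l -> StronglySorted lt (filter f l).
Proof.
  induction l; simpl; intros H; auto. inversion H; subst. destruct (f a); auto.
  constructor; auto. apply Forall_forall. intros x Hx. apply filter_In in Hx.
  rewrite Forall_forall in H3. apply H3; tauto.
Qed.

Lemma length_filter_seq (f : nat -> bool) k :
  INR (length (filter f (seq 0 k))) = rsum k (fun j => if f j then 1 else 0).
Proof.
  induction k; [simpl; auto|]. rewrite seq_S, filter_app, length_app, plus_INR, IHk. simpl.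
  destruct (f k); simpl; lra.
Qed.

Definition cols_of (m n : nat) (B : mat) (kap : nat -> nat) : list nat :=
  filter (in_image m B kap) (seq 0 n).

Lemma cols_of_In m n B kap j : In j (cols_of m n B kap) <-> (j < n)%nat /\ in_image m B kap j = true.
Proof. unfold cols_of. rewrite filter_In, in_seq. split; intros [H1 H2]; split; auto; lia. Qed.

Lemma cols_of_in_MB m n B kap : col_monomial m n B -> is_section m n B kap ->
  in_MB m n B (cols_of m n B kap) /\
  forall i, (i < m)%nat -> section_of m B (cols_of m n B kap) i = kap i.
Proof.
  intros HB Hkap. set (K := cols_of m n B kap).
  assert (Hlen : length K = m).
  { apply INR_eq. unfold K, cols_of. rewrite length_filter_seq, (rsum_image m n B HB kap Hkap).
    - rewrite (rsum_ext m _ (fun _ => 1)); [apply rsum_const_one|].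
      intros. rewrite (in_image_section m n B HB kap); auto.
    - intros j Hj ->; auto. }
  assert (HND : NoDup K) by (apply NoDup_filter, seq_NoDup).
  assert (HKn : forall j, In j K -> (j < n)%nat) by (intros j Hj; apply cols_of_In in Hj; tauto).
  assert (Himg : forall l, (l < m)%nat -> kap (owner m B (nth_fn K l)) = nth_fn K l).
  { intros l Hl. assert (HI : In (nth_fn K l) K) by (apply nth_In; lia).
    apply cols_of_In in HI. destruct HI as [_ HI]. apply Nat.eqb_eq in HI. exact HI. }
  assert (HKB : in_MB m n B K).
  { split; [split|split]; auto; [apply StronglySorted_filter, StronglySorted_seq|].
    split; [|split].
    - intros i l Hi Hl. apply (proj1 HB); auto. apply HKn, nth_In. lia.
    - intros i Hi. destruct (Hkap i Hi) as [Hk1 Hk2].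
      assert (HinK : In (kap i) K) by (apply cols_of_In; split; auto; apply (in_image_section m n B HB kap); auto).
      destruct (In_nth K (kap i) O HinK) as [l [Hl Hnl]]. rewrite Hlen in Hl.
      exists l. split; auto. unfold colsub. rewrite Hnl. split.
      + destruct (owner_spec m n B HB _ Hk1) as [_ [Hb _]]. unfold owner_val in Hb. rewrite Hk2 in Hb. auto.
      + intros l' Hl' Hp. apply (proj1 (NoDup_nth K O) HND); try lia. rewrite Hnl.
        fold (nth_fn K l'). rewrite <- Himg by auto. f_equal. apply owner_eq with n; auto.
        apply HKn, nth_In. lia.
    - intros l Hl. apply (proj2 (proj2 HB)). apply HKn, nth_In. lia. }
  split; auto. intros i Hi. destruct (pos_of_spec m n B K HB HKB i Hi) as [H1 H2].
  unfold section_of. unfold row_of in H2. rewrite <- Himg, H2; auto.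
Qed.

(** * Optimal GPF-eigenvectors *)

Lemma Rbar_cv_squeeze c (r : nat -> Rbar) (u : nat -> R) : Un_cv u c ->
  (forall N, Rbar_le (Fin c) (r N) /\ Rbar_le (r N) (Fin (u N))) -> Rbar_cv r (Fin c).
Proof.
  intros Hu Hr e He. destruct (Hu e He) as [N0 HN0]. exists N0. intros N HN.
  destruct (Hr N) as [Hlo Hhi]. destruct (r N) as [v|]; [|contradiction].
  exists v. split; auto. specialize (HN0 N HN). unfold Rdist in HN0. simpl in *.
  apply Rabs_def2 in HN0. rewrite Rabs_right; lra.
Qed.

Lemma lift_scal m B kap z s j : lift m B kap (fun i => s * z i) j = s * lift m B kap z j.
Proof. unfold lift. destruct (in_image m B kap j); unfold Rdiv; ring. Qed.

Lemma lift_cv m n B kap (zs : nat -> vec) z : col_monomial m n B ->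
  (forall i, (i < m)%nat -> Un_cv (fun N => zs N i) (z i)) ->
  forall j, (j < n)%nat -> Un_cv (fun N => lift m B kap (zs N) j) (lift m B kap z j).
Proof.
  intros HB Hz j Hj. unfold lift. destruct (in_image m B kap j); [|apply cv_const].
  apply CV_mult; [apply Hz, (owner_spec m n B HB j Hj) | apply cv_const].
Qed.

Section OptimalEigenvector.
Variables (m n : nat) (A B : mat) (kap : nat -> nat) (c : R).
Hypotheses (Hm : (1 <= m)%nat) (HB : col_monomial m n B)
  (HA : forall i j, (i < m)%nat -> (j < n)%nat -> 0 <= A i j) (Hkap : is_section m n B kap)
  (Hc : cw m (section_mat m A B kap) = c).

Lemma rAB_lift_eigvec z i1 : vnonneg m z -> (i1 < m)%nat -> 0 < z i1 ->
  (forall i, (i < m)%nat -> mulv m (section_mat m A B kap) z i = c * z i) ->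
  rAB m n A B (lift m B kap z) = Fin c /\
  forall i, (i < m)%nat -> mulv n A (lift m B kap z) i = c * mulv n B (lift m B kap z) i.
Proof.
  intros Hz Hi1 Hzi1 Heig.
  assert (Hc0 : 0 <= c) by (rewrite <- Hc; apply cw_ge0; auto; apply section_mat_nonneg with n; auto).
  assert (HAy : forall i, (i < m)%nat -> mulv n A (lift m B kap z) i = c * mulv n B (lift m B kap z) i).
  { intros i Hi. rewrite (mulv_lift m n B HB kap Hkap), (mulv_B_lift m n B HB kap Hkap); auto. }
  split; auto. apply Rbar_le_antisym.
  - apply Rbar_maxn_le; auto. intros i Hi. rewrite HAy by auto. apply quot_mul_le; auto.
    rewrite (mulv_B_lift m n B HB kap Hkap); auto.
  - apply (rAB_ge m n A B _ c i1); auto; [|rewrite HAy; auto; lra].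
    rewrite (mulv_B_lift m n B HB kap Hkap); auto.
Qed.

Lemma lift_approximants (zs : nat -> vec) (ts : nat -> R) z :
  (forall N, vpos m (zs N)) ->
  (forall N i, (i < m)%nat -> mulv m (section_mat m A B kap) (zs N) i <= ts N * zs N i) ->
  Un_cv ts c -> (forall i, (i < m)%nat -> Un_cv (fun N => zs N i) (z i)) ->
  lower_bound_rAB m n A B c ->
  exists ys : nat -> vec, (forall N, vpos n (ys N)) /\
    (forall j, (j < n)%nat -> Un_cv (fun N => ys N j) (lift m B kap z j)) /\
    Rbar_cv (fun N => rAB m n A B (ys N)) (Fin c).
Proof.
  intros Hzs Hsub Hts Hzcv Hlow. set (M := section_mat m A B kap) in *.
  assert (HM : mnonneg m M) by (apply section_mat_nonneg with n; auto).
  assert (Hts0 : forall N, 0 <= ts N) by (intros N; apply (cw_bound_ge0 m M); auto; exists (zs N); auto).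
  destruct (choice (fun N x => vpos n x /\
      (forall i, (i < m)%nat -> mulv n A x i <= (ts N + / INR (S N)) * mulv n B x i) /\
      (forall j, (j < n)%nat -> Rabs (x j - lift m B kap (zs N) j) <= / INR (S N)))) as [ys Hys].
  { intros N. apply (lift_perturb m n B HB kap Hkap); auto. apply inv_succ_pos. }
  exists ys. split; [|split]; [intros N; apply Hys | |].
  - intros j Hj. apply (cv_close _ (fun N => lift m B kap (zs N) j)); [intros; apply Hys; auto|].
    apply (lift_cv m n B kap zs z); auto.
  - apply (Rbar_cv_squeeze c _ (fun N => ts N + / INR (S N))).
    + replace c with (c + 0) by ring. apply CV_plus; [auto | apply cv_inv_succ].
    + intros N. destruct (Hys N) as [Hp [Hle _]].
      pose proof (mulv_B_pos m n B HB _ Hp) as HBp. split.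
      * destruct (Hlow (ys N) Hp) as [i [Hi Hci]]. apply (rAB_ge m n A B _ c i); auto.
      * apply rAB_le; auto. pose proof (inv_succ_pos N). specialize (Hts0 N). lra.
Qed.

(* The witness is [y = lift z / sum (lift z)] for the Perron vector [z] of the section matrix. *)
Lemma optimal_gpf_exists : lower_bound_rAB m n A B c -> rhoAB m n A B = Fin c ->
  exists y, in_Pi n y /\ (forall j, (j < n)%nat -> y j <> 0 -> in_image m B kap j = true) /\
    optimal m n A B y /\ GPF_eigenvector m n A B y.
Proof.
  intros Hlow Hrho. set (M := section_mat m A B kap) in *.
  assert (HM : mnonneg m M) by (apply section_mat_nonneg with n; auto).
  destruct (perron_nonneg m M Hm HM) as [z [zs [ts [Hz1 [Hz2 [Hz3 [Hzs1 [Hzs2 [Hts Hzcv]]]]]]]]].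
  rewrite Hc in Hz3, Hts.
  destruct (pos_entry_of_sum1 m z Hz1 Hz2) as [i1 [Hi1 Hzi1]].
  destruct (Hkap i1 Hi1) as [Hk1 _]. destruct (owner_spec m n B HB _ Hk1) as [_ [Hb1 _]].
  set (s := rsum n (lift m B kap z)).
  assert (Hs : 0 < s).
  { apply (rsum_pos n _ (kap i1)); auto; [apply (lift_nonneg m n B HB kap); auto|].
    rewrite (lift_section m n B HB kap Hkap) by auto. apply Rdiv_lt_0_compat; auto. }
  assert (Hsinv : 0 < / s) by (apply Rinv_0_lt_compat; auto).
  set (y := lift m B kap (fun i => / s * z i)).
  assert (Hyeq : forall j, y j = / s * lift m B kap z j) by (intros; apply lift_scal).
  assert (Hzs0 : vnonneg m (fun i => / s * z i)) by (intros i Hi; apply Rmult_le_pos; [lra | auto]).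
  destruct (rAB_lift_eigvec (fun i => / s * z i) i1) as [HrAB HAy]; auto.
  { apply Rmult_lt_0_compat; auto. }
  { intros i Hi. rewrite mulv_scal, Hz3; auto. ring. }
  fold y in HrAB, HAy.
  destruct (lift_approximants (fun N i => / s * zs N i) ts (fun i => / s * z i)) as [ys [Hys1 [Hys2 Hys3]]];
    auto.
  { intros N i Hi. apply Rmult_lt_0_compat; auto. apply Hzs1; auto. }
  { intros N i Hi. rewrite mulv_scal. fold M. specialize (Hzs2 N i Hi). nra. }
  { intros i Hi. apply CV_mult; [apply cv_const | auto]. }
  assert (Hy0 : vnonneg n y) by (apply (lift_nonneg m n B HB kap); auto).
  assert (Hynz : vnonzero n y).
  { exists (kap i1). split; auto. rewrite Hyeq, (lift_section m n B HB kap Hkap) by auto.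
    apply Rgt_not_eq, Rmult_lt_0_compat, Rdiv_lt_0_compat; auto. }
  exists y. split; [split|split; [|split]]; auto.
  - rewrite (rsum_ext n _ (fun j => / s * lift m B kap z j)) by (intros; apply Hyeq).
    rewrite rsum_scal_l. fold s. field. lra.
  - intros j Hj Hyj. destruct (in_image m B kap j) eqn:E; auto.
    exfalso. apply Hyj, lift_image; auto.
  - split; [|split; [|split]]; auto.
    + rewrite HrAB, Hrho; auto.
    + exists ys. rewrite Hrho. auto.
  - split; [|split]; auto. exists c. auto.
Qed.

End OptimalEigenvector.

(** * Minimality under S-irreducibility *)

Lemma irreducible_subeigvec_zero k C c zeta l0 : irreducible k C -> mnonneg k C -> vnonneg k zeta ->
  (forall l, (l < k)%nat -> mulv k C zeta l <= c * zeta l) -> (l0 < k)%nat -> zeta l0 = 0 ->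
  forall l, (l < k)%nat -> zeta l = 0.
Proof.
  intros Hirr HC Hz Hsub Hl0 Hzl0 l Hl.
  assert (Hstep : forall a b, digraph_edge k C a b -> zeta a = 0 -> zeta b = 0).
  { intros a b [Ha [Hb Hp]] Hza. specialize (Hsub a Ha). rewrite Hza, Rmult_0_r in Hsub.
    assert (C a b * zeta b <= mulv k C zeta a).
    { apply (rsum_ge_term k (fun l => C a l * zeta l)); auto.
      intros; apply Rmult_le_pos; [apply HC | apply Hz]; auto. }
    specialize (Hz b Hb). nra. }
  assert (Hpath : forall a b, clos_refl_trans nat (digraph_edge k C) a b -> zeta a = 0 -> zeta b = 0)
    by (intros a b Hab; induction Hab; eauto).
  apply (Hpath l0); auto.
Qed.

Lemma image_supported_subeigvec m n A B kap z c : col_monomial m n B -> is_section m n B kap ->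
  (forall i j, (i < m)%nat -> (j < n)%nat -> 0 <= A i j) -> vnonneg n z ->
  (forall j, (j < n)%nat -> in_image m B kap j = false -> z j = 0) ->
  Rbar_le (rAB m n A B z) (Fin c) ->
  vnonneg m (mulv n B z) /\
  (forall i, (i < m)%nat -> mulv m (section_mat m A B kap) (mulv n B z) i <= c * mulv n B z i) /\
  (forall j, (j < n)%nat -> z j = lift m B kap (mulv n B z) j).
Proof.
  intros HB Hkap HA Hz Himg Hr.
  assert (HzE : forall j, (j < n)%nat -> z j = lift m B kap (mulv n B z) j).
  { intros j Hj. unfold lift. destruct (in_image m B kap j) eqn:E; [|apply Himg; auto].
    destruct (owner_spec m n B HB j Hj) as [Hs1 [Hs2 _]].
    assert (Hk : kap (owner m B j) = j) by (apply Nat.eqb_eq; auto).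
    rewrite (mulv_B_image m n B HB kap Hkap) by auto. rewrite Hk. field. lra. }
  split; [|split]; auto.
  - intros i Hi. apply rsum_nonneg. intros j Hj. apply Rmult_le_pos; [apply (proj1 HB) | apply Hz]; auto.
  - intros i Hi. rewrite <- (mulv_lift m n B HB kap Hkap).
    rewrite (mulv_ext n A A _ z) by (auto; intros; symmetry; apply HzE; auto).
    apply (rAB_le_inv m n A B z); auto. intros i' Hi'.
    split; apply rsum_nonneg; intros j Hj; apply Rmult_le_pos; try apply Hz; auto;
      first [apply HA | apply (proj1 HB)]; auto.
Qed.

(* A smaller optimal [z] would give the sub-eigenvector [to_K (B z)] of the irreducible [CK]
   with a zero entry, hence [B z = 0] and [z = 0]. *)
Lemma optimal_minimal_of_irreducible m n A B K c y : col_monomial m n B ->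
  (forall i j, (i < m)%nat -> (j < n)%nat -> 0 <= A i j) -> in_MB m n B K ->
  irreducible m (CK m A B K) -> rhoAB m n A B = Fin c ->
  supp_in n y K -> optimal m n A B y -> minimal_optimal m n A B y.
Proof.
  intros HB HA HK Hirr Hrho Hsupp Hopt. split; auto.
  intros [z [[Hz0 [[j1 [Hj1 Hzj1]] [Hzr _]]] [Hsub [j0 [Hj0 [Hyj0 Hzj0]]]]]].
  set (kap := section_of m B K).
  assert (Hkap : is_section m n B kap) by (apply section_of_is_section; auto).
  assert (HinK : forall j, (j < n)%nat -> z j <> 0 -> in_image m B kap j = true).
  { intros j Hj Hne. apply (In_K_iff m n B K HB HK j Hj), Hsupp, Hsub; auto. }
  destruct (image_supported_subeigvec m n A B kap z c HB Hkap HA Hz0) as [Hzeta0 [Hsubeig HzE]].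
  { intros j Hj Hf. apply NNPP. intro Hne. specialize (HinK j Hj Hne). congruence. }
  { rewrite Hzr, Hrho. simpl. lra. }
  set (zeta := mulv n B z) in *.
  destruct (owner_spec m n B HB j0 Hj0) as [Hi0 _]. set (i0 := owner m B j0) in *.
  assert (Hzeta_i0 : zeta i0 = 0).
  { assert (Hk : kap i0 = j0).
    { apply Nat.eqb_eq. apply (In_K_iff m n B K HB HK j0 Hj0), Hsupp; auto. }
    unfold zeta. rewrite (mulv_B_image m n B HB kap Hkap); [rewrite Hk, Hzj0; ring | |auto].
    intros j Hj Hf. apply NNPP. intro Hne. specialize (HinK j Hj Hne). congruence. }
  assert (Hall : forall l, (l < m)%nat -> to_K m B K zeta l = 0).
  { apply (irreducible_subeigvec_zero m (CK m A B K) c _ (pos_of m B K i0)); auto.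
    - apply CK_nonneg with n; auto.
    - apply to_K_nonneg with n; auto.
    - apply CK_to_K_le with n; auto.
    - apply (pos_of_spec m n B K HB HK i0 Hi0).
    - unfold to_K. destruct (pos_of_spec m n B K HB HK i0 Hi0) as [_ ->]. rewrite Hzeta_i0. unfold Rdiv; ring. }
  apply Hzj1. rewrite HzE by auto. unfold lift. destruct (in_image m B kap j1); auto.
  destruct (owner_spec m n B HB j1 Hj1) as [Hs1 _].
  rewrite (to_K_zero m n B K HB HK zeta); auto; [unfold Rdiv; ring|].
  apply Hall, (pos_of_spec m n B K HB HK); auto.
Qed.

Theorem theorem6p5 (m n : nat) (A B : mat) :
  (1 <= m)%nat ->
  WN_pair m n A B ->
  ((exists K0, in_MB m n B K0 /\
       rhoAB m n A B = Fin (spectral_radius m (CK m A B K0))) /\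
   (forall K, in_MB m n B K ->
       Rbar_le (rhoAB m n A B) (Fin (spectral_radius m (CK m A B K))))) /\
  (forall K, in_MB m n B K ->
     rhoAB m n A B = Fin (spectral_radius m (CK m A B K)) ->
     exists y, in_Pi n y /\ supp_in n y K /\ optimal m n A B y /\
               GPF_eigenvector m n A B y) /\
  (S_irreducible m n A B ->
   forall K y, in_MB m n B K ->
     rhoAB m n A B = Fin (spectral_radius m (CK m A B K)) ->
     in_Pi n y -> supp_in n y K -> optimal m n A B y ->
     GPF_eigenvector m n A B y ->
     minimal_optimal m n A B y).
Proof.
  intros Hm [HAB [_ [Hrow Hcol]]].
  assert (HB : col_monomial m n B) by (split; [intros; apply HAB; auto | auto]).
  assert (HA : forall i j, (i < m)%nat -> (j < n)%nat -> 0 <= A i j) by (intros; apply HAB; auto).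
  destruct (minimax_section m n A B Hm HB HA) as [l [Hl Hlow]].
  set (kap0 := nth_fn l) in Hlow. assert (Hkap0 : is_section m n B kap0) by (apply sections_sound; auto).
  set (c := cw m (section_mat m A B kap0)) in Hlow.
  assert (Hrho : rhoAB m n A B = Fin c) by (apply rhoAB_eq_cw_section; auto).
  assert (Hsr : forall K, in_MB m n B K ->
            spectral_radius m (CK m A B K) = cw m (section_mat m A B (section_of m B K)))
    by (intros; apply spectral_radius_CK with n; auto).
  rewrite Hrho. split; [split|split].
  - destruct (cols_of_in_MB m n B kap0 HB Hkap0) as [HK0 Hsec]. exists (cols_of m n B kap0).
    split; auto. rewrite Hsr by auto. f_equal. apply cw_ext.
    intros i i' Hi Hi'. unfold section_mat. rewrite Hsec; auto.
  - intros K HK. rewrite Hsr by auto. apply cw_section_ge with n; auto.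
    apply section_of_is_section; auto.
  - intros K HK HKc. rewrite Hsr in HKc by auto. injection HKc as HKc.
    destruct (optimal_gpf_exists m n A B (section_of m B K) c) as [y [Hy [Hsupp Hopt]]]; auto.
    + apply section_of_is_section; auto.
    + exists y. split; [|split]; auto.
      intros j Hj Hyj. apply (In_K_iff m n B K HB HK j Hj), Hsupp; auto.
  - intros Hirr K y HK _ _ Hsupp Hopt _.
    apply (optimal_minimal_of_irreducible m n A B K c); auto.
Qed.
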